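(* Let $|\psi\rangle=\sum_{n\ge0}\sqrt{p_n}|n\rangle$ and $|\phi\rangle=\sum_{n\ge0}\sqrt{q_n}|n\rangle$ be states of $\mathcal{H}'$, where $p_n,q_n\ge0$ and $\sum_np_n=\sum_nq_n=1$. There exists a deterministic (trace-preserving) U(1)-invariant operation $\mathcal{E}$ with $\mathcal{E}(|\psi\rangle\langle\psi|)=|\phi\rangle\langle\phi|$ if and only if there is a probability distribution $(w_k)_{k\in\mathbb{Z}}$ (i.e. $0\le w_k\le1$, $\sum_kw_k=1$) such that $$\vec p=\sum_{k=-\infty}^{\infty}w_k\Upsilon_k\vec q,$$ where $\vec p=(p_n)_{n\ge0}$, $\vec q=(q_n)_{n\ge0}$, and $\Upsilon_k$ is the shift defined by $(\Upsilon_k\vec q)_{m}=q_{m-k}$ for $m\ge0$ (with $q_{x}:=0$ for $x<0$).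
   Context: Let $\mathcal{H}'$ be the Hilbert space with orthonormal basis $\{|n\rangle: n=0,1,2,\dots\}$, let $\hat N=\sum_n n|n\rangle\langle n|$, and let U(1) act by $T(\phi)=e^{i\phi\hat N}$. A U(1)-invariant operation is a completely positive, trace-nonincreasing linear map $\mathcal{E}$ on operators on $\mathcal{H}'$ with $\mathcal{E}(T(\phi)XT(\phi)^\dagger)=T(\phi)\mathcal{E}(X)T(\phi)^\dagger$ for all $\phi,X$; it is deterministic if it is trace-preserving. *)

From Stdlib Require Import Reals ZArith List.
From Coquelicot Require Import Coquelicot.
Open Scope R_scope.

(* Operators on H' = l^2(N), represented by their matrices in the basis |n>. *)
Definition Op := nat -> nat -> C.

(* Finite linear combinations of basis vectors, v = sum x_a |a>. *)
Fixpoint qform_aux {J : Type} (Y : J -> J -> C) (l0 : list (J * C)) (ax : J * C)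
  : C := match l0 with
         | nil => 0%C
         | by_ :: l' => (Cconj (snd ax) * Y (fst ax) (fst by_) * snd by_
                         + qform_aux Y l' ax)%C
         end.
Definition qform {J : Type} (Y : J -> J -> C) (l : list (J * C)) : C :=
  fold_right (fun ax acc => (qform_aux Y l ax + acc)%C) 0%C l.

(* <v, Y v> is real and nonnegative for every finitely supported v
   (positivity of the operator, tested on the dense span of the basis). *)
Definition psd_on {J : Type} (dom : J -> Prop) (Y : J -> J -> C) : Prop :=
  forall l : list (J * C), List.Forall (fun ax => dom (fst ax)) l ->
    Im (qform Y l) = 0 /\ 0 <= Re (qform Y l).

Definition pos_tc (X : Op) : Prop :=
  psd_on (fun _ => True) X /\ ex_series (fun n => Re (X n n)).

Definition trace_class (X : Op) : Prop :=
  exists X1 X2 X3 X4 : Op, pos_tc X1 /\ pos_tc X2 /\ pos_tc X3 /\ pos_tc X4 /\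
    forall m n, X m n = (X1 m n - X2 m n + Ci * (X3 m n - X4 m n))%C.

Definition has_trace (X : Op) (t : C) : Prop :=
  is_series (V := C_R_NormedModule) (fun n => X n n) t.

(* T(phi) X T(phi)^dagger, with T(phi) = e^{i phi N} *)
Definition eiphi (x : R) : C := (cos x, sin x).
Definition rotU1 (phi : R) (X : Op) : Op :=
  fun m n => (eiphi (phi * INR m) * X m n * eiphi (- (phi * INR n)))%C.

(* Operators on C^d (x) H', as d x d blocks of operators on H'
   (only blocks i, j < d are relevant). *)
Definition psd_block (d : nat) (Y : nat -> nat -> Op) : Prop :=
  psd_on (fun ia : nat * nat => (fst ia < d)%nat)
         (fun ia jb => Y (fst ia) (fst jb) (snd ia) (snd jb)).
Definition pos_tc_block (d : nat) (Y : nat -> nat -> Op) : Prop :=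
  psd_block d Y /\
  ex_series (fun n => fold_right (fun i acc => Re (Y i i n n) + acc) 0 (List.seq 0 d)).

Definition U1_operation (E : Op -> Op) : Prop :=
  (forall X Y (c : C), trace_class X -> trace_class Y ->
     forall m n, E (fun i j => X i j + c * Y i j)%C m n = (E X m n + c * E Y m n)%C) /\
  (forall X, trace_class X -> trace_class (E X)) /\
  (* completely positive *)
  (forall (d : nat) (Y : nat -> nat -> Op), pos_tc_block d Y ->
     psd_block d (fun i j => E (Y i j))) /\
  (forall X t, pos_tc X -> has_trace X t ->
     exists t', has_trace (E X) t' /\ Re t' <= Re t) /\
  (forall phi X, trace_class X -> E (rotU1 phi X) = rotU1 phi (E X)).

Definition deterministic_U1_operation (E : Op -> Op) : Prop :=
  U1_operation E /\
  (forall X t, trace_class X -> has_trace X t -> has_trace (E X) t).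

(* |psi><psi| for |psi> = sum_n sqrt(p_n) |n> *)
Definition proj_sqrt (p : nat -> R) : Op :=
  fun m n => RtoC (sqrt (p m) * sqrt (p n)).

(* summation over Z:  sum_{k in Z} f k = l  (ordering k = 0,-1,1,-2,2,...) *)
Definition is_sumZ (f : Z -> R) (l : R) : Prop :=
  is_series (fun n => f (Z.of_nat n) + f (- Z.of_nat (S n))%Z) l.

Definition extZ (q : nat -> R) (x : Z) : R :=
  if (x <? 0)%Z then 0 else q (Z.to_nat x).

Definition Upsilon (k : Z) (q : nat -> R) : nat -> R :=
  fun m => extZ q (Z.of_nat m - k)%Z.

From Stdlib Require Import Reals ZArith Lra Lia Psatz List Classical FunctionalExtensionality IndefiniteDescription.
From Coquelicot Require Import Coquelicot.
Open Scope R_scope.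

(* A U(1)-covariant operation E sends |m><n| to an operator supported on the diagonal
   a - b = m - n.  Put alpha(m, c) = p_m <c|E(|m><m|)|c>.  Trace preservation gives
   sum_c alpha(m, c) = p_m; splitting |psi> into its first N components and a tail of small
   norm (E is not assumed continuous, so this is done by operator inequalities) gives
   sum_m alpha(m, c) = q_c.  The Choi matrix of E is positive and block diagonal along the
   covariance classes, while E(|psi><psi|) = |phi><phi| is annihilated by
   sqrt(q_b) |a> - sqrt(q_a) |b>; restricting to a 2 x 2 block this forces
   alpha(m, a) q_b = alpha(n, b) q_a whenever a - m = b - n, so that
   alpha(n, a) = w_{n-a} q_a for one distribution w, and the row sums give p = sum_k w_k Upsilon_k q.
   Conversely, given w, the Kraus operators K_k = sum_a sqrt(w_k q_a / p_{a+k}) |a><a+k|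
   satisfy sum_k K_k^dagger K_k = 1 and K_k |psi> = sqrt(w_k) |phi>. *)

(* [psum a N] sums the first [N] terms, whereas [sum_n a N] sums [N + 1] of them. *)
Fixpoint psum (a : nat -> R) (N : nat) : R :=
  match N with O => 0 | S k => psum a k + a k end.

Lemma sum_n_psum a n : sum_n a n = psum a (S n).
Proof. induction n. rewrite sum_O. simpl. rewrite Rplus_0_l. reflexivity. rewrite sum_Sn, IHn. simpl. reflexivity. Qed.

Lemma is_series_psum (a : nat -> R) l : is_series a l <-> is_lim_seq (fun n => psum a n) l.
Proof. split; intros H.
  - apply is_lim_seq_incr_1. eapply is_lim_seq_ext. 2: apply H. intros n. apply sum_n_psum.
  - apply is_lim_seq_incr_1 in H. eapply is_lim_seq_ext in H. apply H. intros n. simpl. rewrite sum_n_psum. reflexivity. Qed.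

Lemma is_series_finite (a : nat -> R) N : (forall n, (N <= n)%nat -> a n = 0) -> is_series a (psum a N).
Proof. intros H. apply is_series_psum. apply is_lim_seq_ext_loc with (fun _ => psum a N).
  exists N. intros n Hn. induction Hn. reflexivity. simpl. rewrite H by lia. rewrite IHHn. ring.
  apply is_lim_seq_const. Qed.

Lemma ex_series_finite (a : nat -> R) N : (forall n, (N <= n)%nat -> a n = 0) -> ex_series a.
Proof. intros H. eexists. apply (is_series_finite a N). auto. Qed.

Lemma is_series_zero : is_series (fun _ : nat => 0) 0.
Proof. apply (is_series_finite _ 0). auto. Qed.

Lemma psum_nonneg a N : (forall n, 0 <= a n) -> 0 <= psum a N.
Proof. intros H; induction N; simpl. lra. specialize (H N). lra. Qed.

Lemma psum_ext a b N : (forall i, (i < N)%nat -> a i = b i) -> psum a N = psum b N.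
Proof. induction N; simpl; intros H. reflexivity. rewrite IHN by auto. rewrite H by lia. reflexivity. Qed.

Lemma psum_le a b N : (forall n, a n <= b n) -> psum a N <= psum b N.
Proof. intros H. induction N; simpl. lra. specialize (H N). lra. Qed.

Lemma psum_plus a b J : psum (fun j => a j + b j) J = psum a J + psum b J.
Proof. induction J; simpl. ring. rewrite IHJ. ring. Qed.

Lemma psum_shift a c J : psum a (c + J) = psum a c + psum (fun j => a (c + j)%nat) J.
Proof. induction J; simpl. rewrite Nat.add_0_r. ring. rewrite Nat.add_succ_r. simpl. rewrite IHJ. ring. Qed.

Lemma psum_shift1 g c : psum g (S c) = g 0%nat + psum (fun i => g (S i)) c.
Proof. induction c. simpl. ring. change (psum g (S (S c))) with (psum g (S c) + g (S c)).
  rewrite IHc. simpl. ring. Qed.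

Lemma psum_rev a c : psum a c = psum (fun i => a (c - S i)%nat) c.
Proof. induction c. reflexivity.
  change (psum a (S c)) with (psum a c + a c). rewrite IHc, psum_shift1.
  replace (S c - 1)%nat with c by lia. simpl. ring. Qed.

Lemma psum_const_after b c J : (forall j, (c <= j)%nat -> b j = 0) -> (c <= J)%nat -> psum b J = psum b c.
Proof. intros H HJ. induction HJ. reflexivity. simpl. rewrite IHHJ, H by lia. ring. Qed.

Lemma term_le_psum a n c : (forall k, 0 <= a k) -> (n < c)%nat -> a n <= psum a c.
Proof. intros H Hn. induction Hn. simpl. pose proof (psum_nonneg a n H). lra.
  simpl. specialize (H m). lra. Qed.

Lemma psum_le_series a l N : (forall n, 0 <= a n) -> is_series a l -> psum a N <= l.
Proof. intros Hpos H. apply is_series_psum in H.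
  apply (is_lim_seq_incr_compare _ _ H). intros n. simpl. specialize (Hpos n). lra. Qed.

Lemma term_le_series a l n : (forall n, 0 <= a n) -> is_series a l -> a n <= l.
Proof. intros Hpos H. pose proof (psum_le_series a l (S n) Hpos H). simpl in H0.
  pose proof (psum_nonneg a n Hpos). lra. Qed.

Lemma is_series_uniq (a : nat -> R) l1 l2 : is_series a l1 -> is_series a l2 -> l1 = l2.
Proof. intros H1 H2. rewrite <- (is_series_unique _ _ H1). apply is_series_unique. auto. Qed.

Lemma is_series_extR (a b : nat -> R) l : (forall n, a n = b n) -> is_series a l -> is_series b l.
Proof. apply is_series_ext. Qed.

Lemma is_series_plusR a b la lb : is_series a la -> is_series b lb -> is_series (fun n => a n + b n) (la + lb).
Proof. intros H1 H2. exact (is_series_plus a b la lb H1 H2). Qed.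

Lemma is_series_scalR c a la : is_series a la -> is_series (fun n => c * a n) (c * la).
Proof. intros H1. exact (is_series_scal_l c a la H1). Qed.

Lemma is_series_minusR a b la lb : is_series a la -> is_series b lb -> is_series (fun n => a n - b n) (la - lb).
Proof. intros H1 H2. exact (is_series_minus a b la lb H1 H2). Qed.

Lemma ex_series_le_R (a b : nat -> R) : (forall n, Rabs (a n) <= b n) -> ex_series b -> ex_series a.
Proof. intros H Hb. apply (ex_series_le a b); auto. Qed.

Lemma is_series_ext_eq (a b : nat -> R) (l l' : R) : (forall n, a n = b n) -> is_series a l -> l = l' -> is_series b l'.
Proof. intros H1 H2 <-. eapply is_series_extR; eauto. Qed.

Lemma is_series_tail (a : nat -> R) L c : is_series a L ->
  is_series (fun k => a (c + k)%nat) (L - psum a c).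
Proof. intros H. apply is_series_psum. apply is_series_psum in H.
  apply (is_lim_seq_incr_n _ c) in H.
  eapply is_lim_seq_ext. 2: apply (is_lim_seq_minus' _ _ _ _ H (is_lim_seq_const (psum a c))).
  intros n. simpl. rewrite Nat.add_comm, psum_shift. ring. Qed.

Lemma ex_series_shift (D : nat -> R) c : ex_series D -> ex_series (fun j => D (c + j)%nat).
Proof. intros [l Hl]. eexists. apply is_series_tail. exact Hl. Qed.

Lemma ex_series_plusR (a b : nat -> R) : ex_series a -> ex_series b -> ex_series (fun n => a n + b n).
Proof. intros [l1 H1] [l2 H2]. eexists. apply (is_series_plusR _ _ _ _ H1 H2). Qed.

Lemma ex_series_divR (a : nat -> R) c : ex_series a -> ex_series (fun n => a n / c).
Proof. intros H. apply (ex_series_scal_r (/c) a H). Qed.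

Lemma psum_tail_small p : is_series p 1 -> forall eps, 0 < eps -> exists N0, forall N, (N0 <= N)%nat -> Rabs (1 - psum p N) < eps.
Proof. intros H eps Heps. apply is_series_psum in H. apply is_lim_seq_spec in H.
  destruct (H (mkposreal eps Heps)) as [N0 HN]. exists N0. intros N HN'. specialize (HN N HN').
  simpl in HN. rewrite Rabs_minus_sym. exact HN. Qed.

Lemma le0_of_le_tail p (g K : R) N1 : is_series p 1 -> 0 <= K ->
  (forall N, (N1 <= N)%nat -> g <= K * (1 - psum p N)) -> g <= 0.
Proof. intros Hp HK H. destruct (Rle_or_lt g 0) as [?|Hg]; auto.
  destruct (psum_tail_small p Hp (g / (K+1))) as [N0 HN0]. apply Rdiv_lt_0_compat; lra.
  specialize (HN0 (max N0 N1) ltac:(lia)). specialize (H (max N0 N1) ltac:(lia)).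
  apply Rabs_lt_between in HN0. destruct HN0 as [_ HN0].
  assert (K * (1 - psum p (max N0 N1)) <= K * (g / (K+1))) by (apply Rmult_le_compat_l; lra).
  assert (K * (g/(K+1)) < g).
  { apply Rmult_lt_reg_r with (K+1). lra. field_simplify; nra. }
  lra. Qed.

Lemma series_one_pos_term q : (forall n, 0 <= q n) -> is_series q 1 -> exists b, 0 < q b.
Proof. intros hq H. apply NNPP. intros Hn.
  assert (Hz : forall n, q n = 0).
  { intros n. destruct (hq n); auto. exfalso. apply Hn. exists n. auto. }
  assert (is_series q 0). { eapply is_series_extR. 2: apply is_series_zero. intros; rewrite Hz; reflexivity. }
  pose proof (is_series_uniq _ _ _ H H0). lra. Qed.

Lemma is_lim_seq_le_R (u v : nat -> R) (l1 l2 : R) : (forall n, u n <= v n) ->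
  is_lim_seq u l1 -> is_lim_seq v l2 -> l1 <= l2.
Proof. intros H H1 H2. pose proof (is_lim_seq_le u v l1 l2 H H1 H2). simpl in H0. exact H0. Qed.

Lemma is_series_bounded_nonneg (a : nat -> R) M : (forall n, 0 <= a n) -> (forall N, psum a N <= M) ->
  exists l, is_series a l /\ l <= M.
Proof. intros Hpos HM.
  destruct (ex_finite_lim_seq_incr (psum a) M) as [l Hl].
  - intros n. simpl. specialize (Hpos n). lra.
  - auto.
  - exists l. split. apply is_series_psum. auto.
    apply (is_lim_seq_le_R (psum a) (fun _ => M) l M); auto. apply is_lim_seq_const. Qed.

Lemma psum_swap (f : nat -> nat -> R) I J :
  psum (fun i => psum (fun j => f i j) J) I = psum (fun j => psum (fun i => f i j) I) J.
Proof. revert J. induction I; intros J; simpl.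
  - induction J; simpl. ring. rewrite <- IHJ. ring.
  - rewrite IHI. rewrite <- psum_plus. reflexivity. Qed.

Lemma lim_psum (g : nat -> nat -> R) (s : nat -> R) J :
  (forall j, is_lim_seq (fun I => g I j) (s j)) -> is_lim_seq (fun I => psum (g I) J) (psum s J).
Proof. intros H. induction J; simpl. apply is_lim_seq_const.
  apply (is_lim_seq_plus' _ _ _ _ IHJ (H J)). Qed.

Lemma is_series_swap_nonneg (f : nat -> nat -> R) (r : nat -> R) L :
  (forall i j, 0 <= f i j) -> (forall i, is_series (fun j => f i j) (r i)) -> is_series r L ->
  exists s : nat -> R, (forall j, is_series (fun i => f i j) (s j)) /\ is_series s L.
Proof.
  intros Hpos Hr HL.
  assert (Hr0 : forall i, 0 <= r i).
  { intros i. apply Rle_trans with (psum (fun j => f i j) 0). simpl; lra.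
    apply psum_le_series; auto. }
  assert (Hfr : forall i j, f i j <= r i) by (intros; apply (term_le_series (fun j => f i j)); auto).
  assert (Hs : forall j, exists l, is_series (fun i => f i j) l /\ l <= L).
  { intros j. apply is_series_bounded_nonneg. auto. intros N.
    apply Rle_trans with (psum r N). apply psum_le. auto. apply psum_le_series; auto. }
  set (s := fun j => proj1_sig (constructive_indefinite_description _ (Hs j))).
  assert (Hs' : forall j, is_series (fun i => f i j) (s j) /\ s j <= L).
  { intros j. unfold s. destruct (constructive_indefinite_description _ (Hs j)). auto. }
  clearbody s. clear Hs. rename Hs' into Hs.
  exists s. split. intros j; apply Hs.
  assert (Hs0 : forall j, 0 <= s j).
  { intros j. apply Rle_trans with (psum (fun i => f i j) 0). simpl; lra.
    apply psum_le_series; auto. apply Hs. }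
  assert (HsJ : forall J, psum s J <= L).
  { intros J. apply (is_lim_seq_le_R (fun I => psum (fun j => psum (fun i => f i j) I) J) (fun _ => L)).
    - intros I. rewrite <- psum_swap. apply Rle_trans with (psum r I).
      apply psum_le. intros i. apply psum_le_series; auto. apply psum_le_series; auto.
    - apply lim_psum. intros j. apply is_series_psum. apply Hs.
    - apply is_lim_seq_const. }
  destruct (is_series_bounded_nonneg s L Hs0 HsJ) as [S [HS HSL]].
  replace L with S. auto.
  apply Rle_antisym. auto.
  assert (HrI : forall I, psum r I <= S).
  { intros I. apply (is_lim_seq_le_R (fun J => psum (fun i => psum (fun j => f i j) J) I) (fun J => psum s J)).
    - intros J. rewrite psum_swap. apply psum_le. intros j. apply psum_le_series; auto. apply Hs.
    - apply lim_psum. intros i. apply is_series_psum. apply Hr.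
    - apply is_series_psum. auto. }
  apply (is_lim_seq_le_R (psum r) (fun _ => S)). auto. apply is_series_psum; auto. apply is_lim_seq_const.
Qed.

Lemma is_sumZ_psum f l : is_sumZ f l <->
  is_lim_seq (psum (fun j => f (Z.of_nat j) + f (- Z.of_nat (S j))%Z)) l.
Proof. unfold is_sumZ. apply is_series_psum. Qed.

Lemma is_sumZ_shift f c l : (forall k, (k < - Z.of_nat c)%Z -> f k = 0) ->
  (is_sumZ f l <-> is_series (fun n => f (Z.of_nat n - Z.of_nat c)%Z) l).
Proof.
  intros Hf. rewrite is_sumZ_psum, is_series_psum.
  set (u := psum (fun j => f (Z.of_nat j) + f (- Z.of_nat (S j))%Z)).
  set (v := psum (fun n => f (Z.of_nat n - Z.of_nat c)%Z)).
  assert (Huv : forall J, (c <= J)%nat -> u J = v (c + J)%nat).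
  { intros J HJ. unfold u, v. rewrite psum_plus, psum_shift, (psum_rev _ c).
    rewrite (psum_const_after (fun j => f (- Z.of_nat (S j))%Z) c J); auto.
    2:{ intros j Hj. apply Hf. lia. }
    rewrite (psum_ext (fun i => f (Z.of_nat (c - S i) - Z.of_nat c)%Z) (fun j => f (- Z.of_nat (S j))%Z)).
    rewrite (psum_ext (fun j => f (Z.of_nat (c + j) - Z.of_nat c)%Z) (fun j => f (Z.of_nat j))).
    ring.
    - intros i _. f_equal. lia.
    - intros i Hi. f_equal. lia. }
  split; intros H.
  - apply (is_lim_seq_incr_n _ c). apply is_lim_seq_ext_loc with u.
    exists c. intros n Hn. rewrite Huv by auto. f_equal. lia. auto.
  - apply (is_lim_seq_incr_n _ c) in H. apply is_lim_seq_ext_loc with (fun n => v (n + c)%nat).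
    exists c. intros n Hn. rewrite Huv by auto. f_equal. lia. auto.
Qed.

Lemma is_sumZ_reflect f l : is_sumZ f l <-> is_sumZ (fun k => f (- k - 1)%Z) l.
Proof. unfold is_sumZ. split; apply is_series_extR; intros n.
  - replace (- Z.of_nat n - 1)%Z with (- Z.of_nat (S n))%Z by lia.
    replace (- - Z.of_nat (S n) - 1)%Z with (Z.of_nat n) by lia. ring.
  - replace (- Z.of_nat n - 1)%Z with (- Z.of_nat (S n))%Z by lia.
    replace (- - Z.of_nat (S n) - 1)%Z with (Z.of_nat n) by lia. ring. Qed.

Lemma is_sumZ_reflect_shift f c l : (forall k, (Z.of_nat c < k)%Z -> f k = 0) ->
  (is_sumZ f l <-> is_series (fun n => f (Z.of_nat c - Z.of_nat n)%Z) l).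
Proof. intros Hf. rewrite is_sumZ_reflect. rewrite (is_sumZ_shift _ (S c)).
  - split; apply is_series_extR; intros n; f_equal; lia.
  - intros k Hk. apply Hf. lia. Qed.

Lemma is_sumZ_dominated (f g : Z -> R) L : (forall k, 0 <= g k <= f k) -> is_sumZ f L ->
  exists l, is_sumZ g l.
Proof.
  intros Hg Hf. unfold is_sumZ in *.
  assert (Hgn : forall n, 0 <= g (Z.of_nat n) + g (- Z.of_nat (S n))%Z <= f (Z.of_nat n) + f (- Z.of_nat (S n))%Z).
  { intros n. pose proof (Hg (Z.of_nat n)); pose proof (Hg (- Z.of_nat (S n))%Z). lra. }
  destruct (is_series_bounded_nonneg _ L (fun n => proj1 (Hgn n))) as [l [Hl _]].
  - intros N. apply Rle_trans with (psum (fun n => f (Z.of_nat n) + f (- Z.of_nat (S n))%Z) N).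
    apply psum_le. intros n. apply Hgn.
    apply psum_le_series; auto. intros n. pose proof (Hgn n). lra.
  - exists l. exact Hl.
Qed.

Lemma sum_n_C (a : nat -> C) n :
  sum_n (G:=C_R_NormedModule) a n = (sum_n (fun k => fst (a k)) n, sum_n (fun k => snd (a k)) n).
Proof.
  induction n.
  - rewrite !sum_O. destruct (a 0%nat); reflexivity.
  - rewrite !sum_Sn, IHn. reflexivity.
Qed.

Lemma is_series_C (a : nat -> C) (l : C) :
  is_series (V:=C_R_NormedModule) a l <->
  is_series (fun n => fst (a n)) (fst l) /\ is_series (fun n => snd (a n)) (snd l).
Proof.
  unfold is_series. split.
  - intros H. split.
    + apply filterlim_locally. intros eps.
      generalize (proj1 (filterlim_locally _ _) H eps).
      apply filter_imp. intros n Hb. rewrite sum_n_C in Hb. apply Hb.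
    + apply filterlim_locally. intros eps.
      generalize (proj1 (filterlim_locally _ _) H eps).
      apply filter_imp. intros n Hb. rewrite sum_n_C in Hb. apply Hb.
  - intros [H1 H2]. apply filterlim_locally. intros eps.
    generalize (filter_and _ _ (proj1 (filterlim_locally _ _) H1 eps)
                  (proj1 (filterlim_locally _ _) H2 eps)).
    apply filter_imp. intros n [B1 B2]. rewrite sum_n_C. split; assumption.
Qed.

Definition ex_series_C (f : nat -> C) : Prop := ex_series (fun j => Re (f j)) /\ ex_series (fun j => Im (f j)).

Definition Series_C (f : nat -> C) : C := (Series (fun j => Re (f j)), Series (fun j => Im (f j))).

Lemma Series_C_correct f : ex_series_C f -> is_series (V:=C_R_NormedModule) f (Series_C f).
Proof. intros [H1 H2]. apply is_series_C. split; apply Series_correct; auto. Qed.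

Lemma Series_C_unique f l : is_series (V:=C_R_NormedModule) f l -> Series_C f = l.
Proof. intros H. apply is_series_C in H. destruct H as [H1 H2]. unfold Series_C.
  apply injective_projections; simpl; apply is_series_unique; auto. Qed.

Lemma is_series_Cplus f g l1 l2 : is_series (V:=C_R_NormedModule) f l1 -> is_series (V:=C_R_NormedModule) g l2 ->
  is_series (V:=C_R_NormedModule) (fun j => f j + g j)%C (l1 + l2)%C.
Proof. intros H1 H2. apply is_series_C in H1, H2. apply is_series_C. destruct H1, H2. split.
  apply (is_series_plusR _ _ _ _ H H1). apply (is_series_plusR _ _ _ _ H0 H2). Qed.

Lemma is_series_Cscal c f l : is_series (V:=C_R_NormedModule) f l ->
  is_series (V:=C_R_NormedModule) (fun j => c * f j)%C (c * l)%C.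
Proof. intros H1. apply is_series_C in H1. apply is_series_C. destruct H1 as [H1 H2]. split.
  - eapply is_series_ext_eq. 2: apply (is_series_minusR _ _ _ _ (is_series_scalR (fst c) _ _ H1) (is_series_scalR (snd c) _ _ H2)).
    intros n. destruct c, (f n). simpl. ring. destruct c, l. simpl. ring.
  - eapply is_series_ext_eq. 2: apply (is_series_plusR _ _ _ _ (is_series_scalR (fst c) _ _ H2) (is_series_scalR (snd c) _ _ H1)).
    intros n. destruct c, (f n). simpl. ring. destruct c, l. simpl. ring. Qed.

Lemma is_series_Cext (f g : nat -> C) (l : C) : (forall j, f j = g j) -> is_series (V:=C_R_NormedModule) f l ->
  is_series (V:=C_R_NormedModule) g l.
Proof. intros H. apply is_series_ext. auto. Qed.

Lemma is_series_Cscal_r c f l : is_series (V:=C_R_NormedModule) f l ->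
  is_series (V:=C_R_NormedModule) (fun j => f j * c)%C (l * c)%C.
Proof. intros H. eapply is_series_Cext. 2: rewrite Cmult_comm; apply (is_series_Cscal c _ _ H).
  intros; simpl; apply Cmult_comm. Qed.

Lemma is_series_Czero : is_series (V:=C_R_NormedModule) (fun _ => RtoC 0) (RtoC 0).
Proof. apply is_series_C. split; simpl; apply is_series_zero. Qed.

Lemma is_series_comb4 f1 f2 f3 f4 l1 l2 l3 l4 :
  is_series (V:=C_R_NormedModule) f1 l1 -> is_series (V:=C_R_NormedModule) f2 l2 ->
  is_series (V:=C_R_NormedModule) f3 l3 -> is_series (V:=C_R_NormedModule) f4 l4 ->
  is_series (V:=C_R_NormedModule) (fun j => f1 j - f2 j + Ci * (f3 j - f4 j))%C (l1 - l2 + Ci * (l3 - l4))%C.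
Proof. intros H1 H2 H3 H4.
  assert (Hm : forall f l, is_series (V:=C_R_NormedModule) f l -> is_series (V:=C_R_NormedModule) (fun j => - f j)%C (- l)%C).
  { intros f l H. replace (- l)%C with (RtoC (-1) * l)%C by ring.
    eapply is_series_Cext. 2: apply (is_series_Cscal (RtoC (-1)) _ _ H). intros; simpl; ring. }
  assert (Hmi : forall f g lf lg, is_series (V:=C_R_NormedModule) f lf -> is_series (V:=C_R_NormedModule) g lg ->
     is_series (V:=C_R_NormedModule) (fun j => f j - g j)%C (lf - lg)%C).
  { intros f g lf lg Hf Hg. eapply is_series_Cext. 2: apply (is_series_Cplus _ _ _ _ Hf (Hm _ _ Hg)).
    intros; simpl; ring. }
  apply is_series_Cplus. apply Hmi; auto.
  apply is_series_Cscal. apply Hmi; auto. Qed.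

Lemma is_series_C_nonneg_real (T : nat -> C) l : is_series (V:=C_R_NormedModule) T l ->
  (forall j, Im (T j) = 0 /\ 0 <= Re (T j)) -> Im l = 0 /\ 0 <= Re l.
Proof. intros H HT. apply is_series_C in H. destruct H as [H1 H2]. split.
  - apply (is_series_uniq (fun j => snd (T j))). auto. eapply is_series_extR. 2: apply is_series_zero.
    intros j. symmetry. apply HT.
  - apply (is_lim_seq_le_R (fun _ => 0) (psum (fun j => fst (T j)))). intros n. apply psum_nonneg. intros; apply HT.
    apply is_lim_seq_const. apply is_series_psum. auto. Qed.

Definition lsum {A : Type} (f : A -> C) (l : list A) : C :=
  fold_right (fun x acc => (f x + acc)%C) 0%C l.

Lemma lsum_cons {A} (f : A -> C) x l : lsum f (x :: l) = (f x + lsum f l)%C.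
Proof. reflexivity. Qed.

Lemma lsum_app {A} (f : A -> C) l1 l2 : lsum f (l1 ++ l2) = (lsum f l1 + lsum f l2)%C.
Proof. induction l1; simpl. ring. unfold lsum in *. simpl. rewrite IHl1. ring. Qed.

Lemma lsum_ext {A} (f g : A -> C) l : (forall x, In x l -> f x = g x) -> lsum f l = lsum g l.
Proof. induction l; simpl; intros H. reflexivity. unfold lsum in *; simpl.
  rewrite H by auto. rewrite IHl by auto. reflexivity. Qed.

Lemma lsum_plus {A} (f g : A -> C) l : lsum (fun x => f x + g x)%C l = (lsum f l + lsum g l)%C.
Proof. induction l; unfold lsum in *; simpl. ring. rewrite IHl. ring. Qed.

Lemma lsum_scal {A} (c : C) (f : A -> C) l : lsum (fun x => c * f x)%C l = (c * lsum f l)%C.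
Proof. induction l; unfold lsum in *; simpl. ring. rewrite IHl. ring. Qed.

Lemma lsum_scal_r {A} (c : C) (f : A -> C) l : lsum (fun x => f x * c)%C l = (lsum f l * c)%C.
Proof. induction l; unfold lsum in *; simpl. ring. rewrite IHl. ring. Qed.

Lemma lsum_zero {A} (f : A -> C) l : (forall x, In x l -> f x = 0%C) -> lsum f l = 0%C.
Proof. induction l; intros H; unfold lsum in *; simpl. reflexivity.
  rewrite IHl by auto with datatypes. rewrite H by auto with datatypes. ring. Qed.

Lemma lsum_map {A B} (f : B -> C) (g : A -> B) l : lsum f (map g l) = lsum (fun x => f (g x)) l.
Proof. induction l; unfold lsum in *; simpl; auto. rewrite IHl. reflexivity. Qed.

Lemma lsum_filter {A} (P : A -> bool) (f : A -> C) l :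
  lsum f l = (lsum f (filter P l) + lsum f (filter (fun x => negb (P x)) l))%C.
Proof. induction l; unfold lsum in *; simpl. ring. destruct (P a); simpl; rewrite IHl; ring. Qed.

Lemma lsum_conj {A} (f : A -> C) l : Cconj (lsum f l) = lsum (fun x => Cconj (f x)) l.
Proof. induction l; unfold lsum in *; simpl. apply injective_projections; simpl; lra.
  rewrite Cplus_conj, IHl. reflexivity. Qed.

Lemma lsum_prod {A B} (f : A * B -> C) l1 l2 :
  lsum f (list_prod l1 l2) = lsum (fun x => lsum (fun y => f (x, y)) l2) l1.
Proof. induction l1. reflexivity.
  change (list_prod (a::l1) l2) with (map (fun y => (a, y)) l2 ++ list_prod l1 l2).
  rewrite lsum_app, IHl1, lsum_map, lsum_cons. reflexivity. Qed.

Lemma lsum_seq_single (f : nat -> C) k N : (k < N)%nat -> (forall n, n <> k -> f n = 0%C) ->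
  lsum f (seq 0 N) = f k.
Proof. intros Hk Hf. induction N. lia. rewrite seq_S, lsum_app. unfold lsum at 2. simpl.
  destruct (Nat.eq_dec k N).
  - subst. rewrite lsum_zero. ring. intros x Hx. apply in_seq in Hx. apply Hf. lia.
  - rewrite IHN by lia. rewrite (Hf N) by auto. ring. Qed.

Lemma Re_lsum_seq (f : nat -> C) N : Re (lsum f (seq 0 N)) = psum (fun m => Re (f m)) N.
Proof. induction N. reflexivity. rewrite seq_S, lsum_app, re_plus, IHN.
  change (psum (fun m => Re (f m)) (S N)) with (psum (fun m => Re (f m)) N + Re (f N)).
  unfold lsum; simpl. destruct (f N). simpl. ring. Qed.

Lemma is_series_lsum {A} (f : A -> nat -> C) (g : A -> C) l :
  (forall x, In x l -> is_series (V:=C_R_NormedModule) (f x) (g x)) ->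
  is_series (V:=C_R_NormedModule) (fun j => lsum (fun x => f x j) l) (lsum g l).
Proof. induction l; intros H. apply is_series_Czero.
  rewrite lsum_cons. eapply is_series_Cext. 2: apply is_series_Cplus; [apply H; left; auto|apply IHl; auto with datatypes].
  intros j. rewrite lsum_cons. reflexivity. Qed.

Definition sesq {J : Type} (Y : J -> J -> C) (l1 l2 : list (J * C)) : C :=
  lsum (fun x => lsum (fun y => Cconj (snd x) * Y (fst x) (fst y) * snd y)%C l2) l1.

Lemma qform_sesq {J} (Y : J -> J -> C) l : qform Y l = sesq Y l l.
Proof.
  unfold qform, sesq.
  assert (Ha : forall l0 ax, qform_aux Y l0 ax =
     lsum (fun y => Cconj (snd ax) * Y (fst ax) (fst y) * snd y)%C l0).
  { induction l0; intros; simpl. reflexivity. rewrite IHl0. reflexivity. }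
  generalize l at 1 3. intros l0. induction l; simpl. reflexivity.
  rewrite IHl, Ha. reflexivity.
Qed.

Lemma sesq_app_l {J} (Y : J -> J -> C) l1 l2 l3 : sesq Y (l1 ++ l2) l3 = (sesq Y l1 l3 + sesq Y l2 l3)%C.
Proof. unfold sesq. apply lsum_app. Qed.

Lemma sesq_app_r {J} (Y : J -> J -> C) l1 l2 l3 : sesq Y l1 (l2 ++ l3) = (sesq Y l1 l2 + sesq Y l1 l3)%C.
Proof. unfold sesq. rewrite <- lsum_plus. apply lsum_ext. intros. apply lsum_app. Qed.

Lemma sesq_plus {J} (X Y : J -> J -> C) l1 l2 :
  sesq (fun a b => X a b + Y a b)%C l1 l2 = (sesq X l1 l2 + sesq Y l1 l2)%C.
Proof. unfold sesq. rewrite <- lsum_plus. apply lsum_ext. intros. rewrite <- lsum_plus.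
  apply lsum_ext. intros. ring. Qed.

Lemma sesq_scal {J} (c : C) (X : J -> J -> C) l1 l2 :
  sesq (fun a b => c * X a b)%C l1 l2 = (c * sesq X l1 l2)%C.
Proof. unfold sesq. rewrite <- lsum_scal. apply lsum_ext. intros. rewrite <- lsum_scal.
  apply lsum_ext. intros. ring. Qed.

Lemma qform_plus {J} (X Y : J -> J -> C) l :
  qform (fun a b => X a b + Y a b)%C l = (qform X l + qform Y l)%C.
Proof. rewrite !qform_sesq. apply sesq_plus. Qed.

Lemma qform_scal {J} (c : C) (X : J -> J -> C) l :
  qform (fun a b => c * X a b)%C l = (c * qform X l)%C.
Proof. rewrite !qform_sesq. apply sesq_scal. Qed.

Lemma qform_map {J K : Type} (Y : K -> K -> C) (g : J -> K) l :
  qform (fun x y => Y (g x) (g y)) l = qform Y (map (fun p => (g (fst p), snd p)) l).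
Proof. rewrite !qform_sesq. unfold sesq. rewrite lsum_map. apply lsum_ext. intros. rewrite lsum_map.
  reflexivity. Qed.

Lemma qform_single {J} (Y : J -> J -> C) x (s : R) :
  Re (qform Y ((x, RtoC s) :: nil)) = s*s*Re (Y x x).
Proof. unfold qform; simpl. destruct (Y x x). unfold Re; simpl. ring. Qed.

Lemma qform_pair_Re {J} (Y : J -> J -> C) x y (s t : R) :
  Re (qform Y ((x, RtoC s) :: (y, RtoC t) :: nil)) =
  s*s*Re (Y x x) + s*t*Re (Y x y) + t*s*Re (Y y x) + t*t*Re (Y y y).
Proof. unfold qform; simpl. destruct (Y x x), (Y x y), (Y y x), (Y y y). unfold Re; simpl. ring. Qed.

Lemma qform_pair {J} (Y : J -> J -> C) x y c1 c2 :
  qform Y ((x, c1) :: (y, c2) :: nil) =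
  (Cconj c1 * Y x x * c1 + Cconj c1 * Y x y * c2 + Cconj c2 * Y y x * c1 + Cconj c2 * Y y y * c2)%C.
Proof. unfold qform; simpl. ring. Qed.

Lemma qform_rank1 {J} (f : J -> C) l :
  qform (fun a b => f a * Cconj (f b))%C l =
  (Cconj (lsum (fun y => Cconj (f (fst y)) * snd y)%C l) * lsum (fun y => Cconj (f (fst y)) * snd y)%C l)%C.
Proof.
  rewrite qform_sesq. unfold sesq. rewrite lsum_conj, <- lsum_scal_r. apply lsum_ext. intros x _.
  rewrite <- lsum_scal. apply lsum_ext. intros y _. rewrite Cmult_conj, Cconj_conj. ring.
Qed.

Lemma Cconj_mult_self_nonneg (z : C) : Im (Cconj z * z)%C = 0 /\ 0 <= Re (Cconj z * z)%C.
Proof. destruct z as [x y]. unfold Cconj, Cmult, Re, Im; simpl. split. ring. nra. Qed.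

Lemma psd_rank1 {J} (dom : J -> Prop) (f : J -> C) :
  psd_on dom (fun a b => f a * Cconj (f b))%C.
Proof. intros l _. rewrite qform_rank1. apply Cconj_mult_self_nonneg. Qed.

Lemma psd_plus {J} dom (X Y : J -> J -> C) : psd_on dom X -> psd_on dom Y ->
  psd_on dom (fun a b => X a b + Y a b)%C.
Proof. intros HX HY l Hl. rewrite qform_plus. destruct (HX l Hl), (HY l Hl).
  rewrite re_plus, im_plus. split; lra. Qed.

Lemma psd_scal {J} dom (r : R) (X : J -> J -> C) : 0 <= r -> psd_on dom X ->
  psd_on dom (fun a b => RtoC r * X a b)%C.
Proof. intros Hr HX l Hl. rewrite qform_scal. destruct (HX l Hl).
  rewrite re_scal_l, im_scal_l. rewrite H. split. ring. apply Rmult_le_pos; auto. Qed.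

Lemma psd_entry_bound {J} (dom : J -> Prop) (Y : J -> J -> C) x y : psd_on dom Y -> dom x -> dom y ->
  Rabs (Re (Y x y)) <= (Re (Y x x) + Re (Y y y)) / 2 /\ Rabs (Im (Y x y)) <= (Re (Y x x) + Re (Y y y)) / 2.
Proof. intros H Hx Hy.
  assert (Hf : forall c1 c2, Im (qform Y ((x, c1) :: (y, c2) :: nil)) = 0 /\ 0 <= Re (qform Y ((x, c1) :: (y, c2) :: nil))).
  { intros. apply H. repeat constructor; auto. }
  assert (Hx1 : Im (qform Y ((x, RtoC 1) :: nil)) = 0 /\ 0 <= Re (qform Y ((x, RtoC 1) :: nil))).
  { apply H. repeat constructor; auto. }
  assert (Hy1 : Im (qform Y ((y, RtoC 1) :: nil)) = 0 /\ 0 <= Re (qform Y ((y, RtoC 1) :: nil))).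
  { apply H. repeat constructor; auto. }
  pose proof (Hf (RtoC 1) (RtoC 1)) as H1. pose proof (Hf (RtoC 1) (RtoC (-1))) as H2.
  pose proof (Hf (RtoC 1) Ci) as H3. pose proof (Hf (RtoC 1) (- Ci)%C) as H4.
  rewrite qform_pair in H1, H2, H3, H4. unfold qform in Hx1, Hy1. simpl in Hx1, Hy1.
  destruct (Y x x) as [a1 a2], (Y x y) as [b1 b2], (Y y x) as [c1 c2], (Y y y) as [d1 d2].
  unfold Re, Im, Cconj, Cmult, Cplus, Ci, RtoC in *. simpl in *.
  destruct H1, H2, H3, H4, Hx1, Hy1.
  split; apply Rabs_le; split; nra.
Qed.

Lemma sesq_split_block {J} (Y : J -> J -> C) (P : J -> bool) L :
  (forall x y, P x = true -> P y = false -> Y x y = 0%C /\ Y y x = 0%C) ->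
  sesq Y L L = (sesq Y (filter (fun z => P (fst z)) L) (filter (fun z => P (fst z)) L) +
               sesq Y (filter (fun z => negb (P (fst z))) L) (filter (fun z => negb (P (fst z))) L))%C.
Proof. intros HP. unfold sesq.
  rewrite (lsum_filter (fun z => P (fst z))).
  set (L1 := filter (fun z => P (fst z)) L). set (L2 := filter (fun z => negb (P (fst z))) L).
  rewrite (lsum_ext _ (fun x => lsum (fun y => Cconj (snd x) * Y (fst x) (fst y) * snd y) L1 +
                               lsum (fun y => Cconj (snd x) * Y (fst x) (fst y) * snd y) L2)%C L1).
  rewrite (lsum_ext _ (fun x => lsum (fun y => Cconj (snd x) * Y (fst x) (fst y) * snd y) L1 +
                               lsum (fun y => Cconj (snd x) * Y (fst x) (fst y) * snd y) L2)%C L2).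
  rewrite !lsum_plus.
  rewrite (lsum_zero (fun x => lsum _ L2) L1). rewrite (lsum_zero (fun x => lsum _ L1) L2). ring.
  - intros x Hx. apply lsum_zero. intros y Hy. unfold L1, L2 in *.
    apply filter_In in Hx, Hy. destruct Hx as [_ Hx], Hy as [_ Hy]. apply Bool.negb_true_iff in Hx.
    rewrite (proj2 (HP (fst y) (fst x) Hy Hx)). ring.
  - intros x Hx. apply lsum_zero. intros y Hy. unfold L1, L2 in *.
    apply filter_In in Hx, Hy. destruct Hx as [_ Hx], Hy as [_ Hy]. apply Bool.negb_true_iff in Hy.
    rewrite (proj1 (HP (fst x) (fst y) Hx Hy)). ring.
  - intros. apply lsum_filter.
  - intros. apply lsum_filter.
Qed.

Lemma filter_map {A B} (f : B -> bool) (g : A -> B) l : filter f (map g l) = map g (filter (fun x => f (g x)) l).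
Proof. induction l; simpl. reflexivity. destruct (f (g a)); simpl; rewrite IHl; reflexivity. Qed.

Lemma filter_seq_none (f : nat -> bool) N : (forall m, (m < N)%nat -> f m = false) -> filter f (seq 0 N) = nil.
Proof. induction N; intros H. reflexivity. rewrite seq_S, filter_app, IHN by auto. simpl.
  rewrite H by lia. reflexivity. Qed.

Lemma filter_seq_one (f : nat -> bool) k N : (forall m, f m = Nat.eqb m k) -> (k < N)%nat ->
  filter f (seq 0 N) = k :: nil.
Proof. intros Hf. induction N; intros Hk. lia. rewrite seq_S, filter_app. simpl. rewrite Hf.
  destruct (Nat.eqb_spec N k).
  - subst. rewrite filter_seq_none. reflexivity. intros m Hm. rewrite Hf. apply Nat.eqb_neq. lia.
  - rewrite IHN by lia. reflexivity. Qed.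

Lemma fold_sum_zero (f : nat -> R) l : (forall x, In x l -> f x = 0) ->
  fold_right (fun i acc => f i + acc) 0 l = 0.
Proof. induction l; simpl; intros H. reflexivity. rewrite H by auto. rewrite IHl by auto. ring. Qed.

Lemma fold_sum_ge_term (f : nat -> R) l i : (forall x, In x l -> 0 <= f x) -> In i l -> f i <= fold_right (fun j acc => f j + acc) 0 l.
Proof. intros H Hi. induction l; simpl in *. contradiction.
  assert (0 <= fold_right (fun j acc => f j + acc) 0 l).
  { clear - H. induction l; simpl. lra. assert (0 <= f a0) by (apply H; simpl; auto).
    assert (0 <= fold_right (fun j acc => f j + acc) 0 l) by (apply IHl; intros; apply H; simpl in *; tauto). lra. }
  assert (0 <= f a) by auto.
  destruct Hi as [<-|Hi]. lra. specialize (IHl (fun x Hx => H x (or_intror Hx)) Hi). lra. Qed.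

Lemma nonneg_quadratic_flat v c A : 0 <= A -> v <= 0 ->
  (forall e, 0 <= v + e * c + A * e * e) -> c = 0.
Proof.
  intros HA Hv H. specialize (H (- c / (2 * (A + 1)))).
  assert (He : v + - c / (2 * (A + 1)) * c + A * (- c / (2 * (A + 1))) * (- c / (2 * (A + 1)))
               = v - c * c * (A + 2) / (4 * (A + 1) * (A + 1))) by (field; lra).
  assert (Hc : 0 <= - c * c * (A + 2)).
  { replace (- c * c * (A + 2)) with ((- c * c * (A + 2) / (4 * (A + 1) * (A + 1))) * (4 * (A + 1) * (A + 1)))
      by (field; lra).
    apply Rmult_le_pos; nra. }
  nra.
Qed.

Lemma binary_form_null_balanced A B C x y : (forall s t, 0 <= A*s*s + B*s*t + C*t*t) ->
  A*x*x + B*x*y + C*y*y <= 0 -> A*x*x = C*y*y.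
Proof.
  intros H Hxy.
  assert (HA : 0 <= A) by (specialize (H 1 0); nra).
  assert (HC : 0 <= C) by (specialize (H 0 1); nra).
  assert (Ex : 2*A*x + B*y = 0).
  { apply (nonneg_quadratic_flat _ _ A HA Hxy). intros e.
    replace (A*x*x + B*x*y + C*y*y + e*(2*A*x + B*y) + A*e*e) with (A*(x+e)*(x+e) + B*(x+e)*y + C*y*y)
      by ring. apply H. }
  assert (Ey : 2*C*y + B*x = 0).
  { apply (nonneg_quadratic_flat _ _ C HC Hxy). intros e.
    replace (A*x*x + B*x*y + C*y*y + e*(2*C*y + B*x) + C*e*e) with (A*x*x + B*x*(y+e) + C*(y+e)*(y+e))
      by ring. apply H. }
  apply Rminus_diag_uniq.
  replace (A*x*x - C*y*y) with ((x * (2*A*x + B*y) - y * (2*C*y + B*x)) / 2) by field.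
  rewrite Ex, Ey. field.
Qed.

Lemma Op_ext (X Y : Op) : (forall i j, X i j = Y i j) -> X = Y.
Proof. intros H. apply functional_extensionality; intros i; apply functional_extensionality; intros j; auto. Qed.

Definition zero_op : Op := fun _ _ => 0%C.

Lemma pos_tc_plus X Y : pos_tc X -> pos_tc Y -> pos_tc (fun a b => X a b + Y a b)%C.
Proof. intros [H1 H2] [H3 H4]. split. apply psd_plus; auto.
  eapply ex_series_ext. 2: apply (ex_series_plus _ _ H2 H4). intros n. rewrite re_plus. reflexivity. Qed.

Lemma pos_tc_scal (r : R) X : 0 <= r -> pos_tc X -> pos_tc (fun a b => RtoC r * X a b)%C.
Proof. intros Hr [H1 H2]. split. apply psd_scal; auto.
  eapply ex_series_ext. 2: apply (ex_series_scal_l r _ H2). intros n. rewrite re_scal_l. reflexivity. Qed.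

Lemma pos_tc_zero : pos_tc zero_op.
Proof. split. intros l _. unfold zero_op. replace (qform (fun _ _ : nat => 0%C) l) with (RtoC 0 * qform (fun _ _ => 0%C) l)%C.
  2:{ rewrite <- qform_scal. f_equal. apply functional_extensionality; intros; apply functional_extensionality; intros; ring. }
  rewrite re_scal_l, im_scal_l. split; lra.
  exists 0. eapply is_series_ext. 2: apply is_series_zero. intros; reflexivity. Qed.

Lemma pos_tc_rank1 (f : nat -> C) : ex_series (fun n => Re (f n * Cconj (f n))%C) ->
  pos_tc (fun a b => f a * Cconj (f b))%C.
Proof. intros H. split. apply psd_rank1. exact H. Qed.

Lemma trace_class_pos X : pos_tc X -> trace_class X.
Proof. intros H. exists X, zero_op, zero_op, zero_op. split; [exact H|]. split; [apply pos_tc_zero|].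
  split; [apply pos_tc_zero|]. split; [apply pos_tc_zero|].
  intros m n. unfold zero_op. ring. Qed.

Lemma trace_class_plus X Y : trace_class X -> trace_class Y -> trace_class (fun a b => X a b + Y a b)%C.
Proof. intros (X1&X2&X3&X4&P1&P2&P3&P4&HX) (Y1&Y2&Y3&Y4&Q1&Q2&Q3&Q4&HY).
  exists (fun a b => X1 a b + Y1 a b)%C, (fun a b => X2 a b + Y2 a b)%C,
    (fun a b => X3 a b + Y3 a b)%C, (fun a b => X4 a b + Y4 a b)%C.
  split; [apply pos_tc_plus; auto|]. split; [apply pos_tc_plus; auto|].
  split; [apply pos_tc_plus; auto|]. split; [apply pos_tc_plus; auto|].
  intros m n. rewrite HX, HY. ring. Qed.

Lemma trace_class_scal (r : R) X : 0 <= r -> trace_class X -> trace_class (fun a b => RtoC r * X a b)%C.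
Proof. intros Hr (X1&X2&X3&X4&P1&P2&P3&P4&HX).
  exists (fun a b => RtoC r * X1 a b)%C, (fun a b => RtoC r * X2 a b)%C,
    (fun a b => RtoC r * X3 a b)%C, (fun a b => RtoC r * X4 a b)%C.
  split; [apply pos_tc_scal; auto|]. split; [apply pos_tc_scal; auto|].
  split; [apply pos_tc_scal; auto|]. split; [apply pos_tc_scal; auto|].
  intros m n. rewrite HX. ring. Qed.

Lemma trace_class_zero : trace_class zero_op.
Proof. apply trace_class_pos, pos_tc_zero. Qed.

Lemma pos_tc_diag X n : pos_tc X -> Im (X n n) = 0 /\ 0 <= Re (X n n).
Proof. intros [H _]. assert (H1 := H ((n, RtoC 1) :: nil) ltac:(repeat constructor)).
  rewrite qform_single in H1. unfold qform in H1. simpl in H1. destruct (X n n). unfold Re, Im in *; simpl in *.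
  destruct H1. split; nra. Qed.

Lemma pos_tc_has_trace X : pos_tc X -> exists tr, is_series (fun n => Re (X n n)) tr /\ has_trace X (RtoC tr).
Proof. intros HX. destruct (proj2 HX) as [tr Htr]. exists tr. split; auto.
  unfold has_trace. apply is_series_C. split. simpl. exact Htr.
  simpl. eapply is_series_extR. 2: apply is_series_zero. intros n. symmetry. apply (pos_tc_diag X n HX). Qed.

Lemma has_trace_unique X t1 t2 : has_trace X t1 -> has_trace X t2 -> t1 = t2.
Proof. intros H1 H2. rewrite <- (Series_C_unique _ _ H1). apply Series_C_unique. auto. Qed.

Lemma has_trace_comb4 X X1 X2 X3 X4 t1 t2 t3 t4 :
  (forall m n, X m n = (X1 m n - X2 m n + Ci * (X3 m n - X4 m n))%C) ->
  has_trace X1 t1 -> has_trace X2 t2 -> has_trace X3 t3 -> has_trace X4 t4 ->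
  has_trace X (t1 - t2 + Ci * (t3 - t4))%C.
Proof. intros HX H1 H2 H3 H4. unfold has_trace. eapply is_series_Cext.
  2: apply (is_series_comb4 _ _ _ _ _ _ _ _ H1 H2 H3 H4). intros n. simpl. rewrite HX. reflexivity. Qed.

Definition basis_vec (m i : nat) : C := if Nat.eqb i m then 1%C else 0%C.

Definition basis_op (m n : nat) : Op := fun i j => (basis_vec m i * basis_vec n j)%C.

Lemma lsum_ind_seq (g : nat -> C) i N :
  lsum (fun m => g m * basis_vec m i)%C (seq 0 N) = if Nat.ltb i N then g i else 0%C.
Proof. induction N. simpl. reflexivity.
  rewrite seq_S, lsum_app, IHN. simpl. unfold lsum; simpl. unfold basis_vec.
  destruct (Nat.ltb_spec i N), (Nat.ltb_spec i (S N)), (Nat.eqb_spec i N); try lia; subst; ring. Qed.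

Definition rank1 (f : nat -> C) : Op := fun a b => (f a * Cconj (f b))%C.

Lemma pos_tc_rank1_fin (f : nat -> C) N : (forall n, (N <= n)%nat -> f n = 0%C) -> pos_tc (rank1 f).
Proof. intros H. apply pos_tc_rank1. apply ex_series_finite with N. intros n Hn. rewrite H by auto.
  unfold Cconj, Cmult, Re; simpl. ring. Qed.

(* Polarization: |m><n| is a combination of the rank-one operators |m + s n><m + s n|, s^4 = 1. *)
Lemma basis_op_tc m n : trace_class (basis_op m n).
Proof.
  set (f := fun s : C => fun a => (/2 * (basis_vec m a + s * basis_vec n a))%C).
  assert (Hf : forall s, pos_tc (rank1 (f s))).
  { intros s. apply pos_tc_rank1_fin with (S (max m n)). intros k Hk. unfold f, basis_vec.
    destruct (Nat.eqb_spec k m); [lia|]. destruct (Nat.eqb_spec k n); [lia|]. ring. }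
  exists (rank1 (f 1%C)), (rank1 (f (-1)%C)), (rank1 (f Ci)), (rank1 (f (-Ci)%C)).
  split; [auto|]. split; [auto|]. split; [auto|]. split; [auto|].
  intros i j. unfold rank1, f, basis_op, basis_vec.
  destruct (Nat.eqb i m), (Nat.eqb i n), (Nat.eqb j m), (Nat.eqb j n);
    apply injective_projections; simpl; field.
Qed.

Lemma basis_op_diag_rank1 n : basis_op n n = rank1 (basis_vec n).
Proof. apply Op_ext. intros i j. unfold basis_op, rank1, basis_vec. destruct (Nat.eqb j n); apply injective_projections; simpl; ring. Qed.

Lemma basis_op_diag_pos n : pos_tc (basis_op n n).
Proof. rewrite basis_op_diag_rank1. apply pos_tc_rank1_fin with (S n). intros k Hk. unfold basis_vec.
  destruct (Nat.eqb_spec k n). lia. reflexivity. Qed.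

Definition outer (u : nat -> R) : Op := fun a b => RtoC (u a * u b).

Lemma outer_rank1 u : outer u = rank1 (fun a => RtoC (u a)).
Proof. apply Op_ext. intros. unfold outer, rank1. apply injective_projections; simpl; ring. Qed.

Lemma outer_pos u l : is_series (fun n => u n * u n) l -> pos_tc (outer u).
Proof. intros H. rewrite outer_rank1. apply pos_tc_rank1. exists l.
  eapply is_series_ext. 2: exact H. intros n. simpl. ring. Qed.

Lemma outer_tc u l : is_series (fun n => u n * u n) l -> trace_class (outer u).
Proof. intros. apply trace_class_pos. eapply outer_pos; eauto. Qed.

Lemma outer_trace u l : is_series (fun n => u n * u n) l -> has_trace (outer u) (RtoC l).
Proof. intros H. unfold has_trace. apply is_series_C. split.
  - simpl. eapply is_series_ext. 2: exact H. intros n. reflexivity.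
  - simpl. apply is_series_zero. Qed.

Lemma eiphi_mult x y : (eiphi x * eiphi y)%C = eiphi (x + y).
Proof. unfold eiphi. apply injective_projections; simpl.
  rewrite cos_plus. ring. rewrite sin_plus. ring. Qed.

Lemma eiphi_nz x : eiphi x <> 0%C.
Proof. unfold eiphi. intros H. injection H. intros H1 H2. pose proof (sin2_cos2 x).
  rewrite H1, H2 in H0. unfold Rsqr in H0. lra. Qed.

Lemma eiphi_PI x : eiphi (x + PI) = (- eiphi x)%C.
Proof. unfold eiphi. apply injective_projections; simpl. apply neg_cos. apply neg_sin. Qed.

Lemma Cconj_R (r : R) : Cconj (RtoC r) = RtoC r.
Proof. apply injective_projections; simpl; lra. Qed.

Lemma E_zero E : U1_operation E -> E zero_op = zero_op.
Proof. intros (Hlin&_). apply Op_ext. intros m n.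
  pose proof (Hlin zero_op zero_op 1%C trace_class_zero trace_class_zero m n) as H.
  replace (fun i j : nat => (zero_op i j + 1 * zero_op i j)%C) with zero_op in H.
  2:{ apply Op_ext. intros; unfold zero_op; ring. }
  change (zero_op m n) with (RtoC 0). revert H. generalize (E zero_op m n). intros [x y] H.
  injection H. simpl. intros. apply injective_projections; simpl; lra. Qed.

Lemma E_lin E X Y c : U1_operation E -> trace_class X -> trace_class Y ->
  E (fun i j => X i j + c * Y i j)%C = (fun i j => E X i j + c * E Y i j)%C.
Proof. intros (Hlin&_) HX HY. apply Op_ext. intros; apply Hlin; auto. Qed.

Lemma E_add E X Y : U1_operation E -> trace_class X -> trace_class Y ->
  E (fun i j => X i j + Y i j)%C = (fun i j => E X i j + E Y i j)%C.
Proof. intros HE HX HY. pose proof (E_lin E X Y 1%C HE HX HY) as H.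
  replace (fun i j : nat => (X i j + 1 * Y i j)%C) with (fun i j : nat => (X i j + Y i j)%C) in H
    by (apply Op_ext; intros; ring).
  rewrite H. apply Op_ext; intros; ring. Qed.

Lemma E_scal E X c : U1_operation E -> trace_class X ->
  E (fun i j => c * X i j)%C = (fun i j => c * E X i j)%C.
Proof. intros HE HX. pose proof (E_lin E zero_op X c HE trace_class_zero HX) as H.
  replace (fun i j : nat => (zero_op i j + c * X i j)%C) with (fun i j : nat => (c * X i j)%C) in H
    by (apply Op_ext; intros; unfold zero_op; ring).
  rewrite H, (E_zero E HE). apply Op_ext; intros; unfold zero_op; ring. Qed.

Lemma E_comb E X1 X2 Y1 Y2 c1 c2 : U1_operation E ->
  trace_class X1 -> trace_class X2 -> trace_class Y1 -> trace_class Y2 ->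
  (forall i j, (X1 i j + c1 * X2 i j = Y1 i j + c2 * Y2 i j)%C) ->
  forall a b, (E X1 a b + c1 * E X2 a b = E Y1 a b + c2 * E Y2 a b)%C.
Proof. intros HE H1 H2 H3 H4 H a b.
  transitivity (E (fun i j => X1 i j + c1 * X2 i j)%C a b).
  rewrite (E_lin E X1 X2 c1 HE H1 H2). reflexivity.
  transitivity (E (fun i j => Y1 i j + c2 * Y2 i j)%C a b).
  f_equal. apply Op_ext. auto.
  rewrite (E_lin E Y1 Y2 c2 HE H3 H4). reflexivity. Qed.

Lemma E_lsum {A} E (F : A -> Op) l : U1_operation E -> (forall x, In x l -> trace_class (F x)) ->
  trace_class (fun i j => lsum (fun x => F x i j) l) /\
  E (fun i j => lsum (fun x => F x i j) l) = (fun a b => lsum (fun x => E (F x) a b) l).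
Proof. intros HE. induction l; intros H.
  - split. apply trace_class_zero. change (fun i j : nat => lsum (fun x : A => F x i j) nil) with zero_op.
    rewrite (E_zero E HE). reflexivity.
  - destruct IHl as [IH1 IH2]. auto with datatypes. split.
    + apply (trace_class_plus (F a)); auto with datatypes.
    + change (fun i j => lsum (fun x => F x i j) (a :: l)) with
        (fun i j => F a i j + lsum (fun x => F x i j) l)%C.
      rewrite (E_add E _ _ HE); auto with datatypes. rewrite IH2. reflexivity. Qed.

(* Rotating by phi = pi / (a + n - b - m) multiplies the entry both by e^{i phi (m - n)} and by
   its opposite. *)
Lemma E_basis_op_offdiag E m n a b : U1_operation E -> (a + n <> b + m)%nat -> E (basis_op m n) a b = 0%C.
Proof.
  intros HE Hne. pose proof HE as (_&_&_&_&Hcov).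
  set (D := INR a + INR n - INR b - INR m).
  assert (HD : D <> 0).
  { unfold D. intros H. apply Hne. apply INR_eq. rewrite !plus_INR. lra. }
  set (phi := PI / D).
  set (c := (eiphi (phi * INR m) * eiphi (- (phi * INR n)))%C).
  assert (Hrot : rotU1 phi (basis_op m n) = (fun i j => c * basis_op m n i j)%C).
  { apply Op_ext. intros i j. unfold rotU1, basis_op, basis_vec, c.
    destruct (Nat.eqb_spec i m), (Nat.eqb_spec j n); subst; ring. }
  pose proof (Hcov phi (basis_op m n) (basis_op_tc m n)) as H.
  rewrite Hrot, (E_scal E _ c HE (basis_op_tc m n)) in H.
  apply (f_equal (fun X => X a b)) in H. unfold rotU1 in H.
  set (T := E (basis_op m n) a b) in *.
  assert (Hc : c = eiphi (phi * (INR m - INR n))).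
  { unfold c. rewrite eiphi_mult. f_equal. ring. }
  assert (Hc' : (eiphi (phi * INR a) * eiphi (- (phi * INR b)))%C = (- c)%C).
  { rewrite eiphi_mult, Hc, <- eiphi_PI. f_equal. unfold phi, D. field. exact HD. }
  assert (H2 : (c * T = T * (eiphi (phi * INR a) * eiphi (- (phi * INR b))))%C).
  { rewrite H. ring. }
  rewrite Hc' in H2.
  assert (Hcnz : c <> 0%C) by (rewrite Hc; apply eiphi_nz).
  assert (H3 : ((2 * c) * T = 0)%C). { replace ((2*c)*T)%C with (c * T + c*T)%C by ring.
    rewrite H2 at 1. ring. }
  replace T with (/ (2 * c) * ((2 * c) * T))%C.
  rewrite H3. ring. field. exact Hcnz.
Qed.

Lemma choi_psd E d (L : list ((nat*nat)*C)) : U1_operation E -> List.Forall (fun ax : (nat*nat)*C => (fst (fst ax) < d)%nat) L ->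
  Im (qform (fun x y => E (basis_op (fst x) (fst y)) (snd x) (snd y)) L) = 0 /\
  0 <= Re (qform (fun x y => E (basis_op (fst x) (fst y)) (snd x) (snd y)) L).
Proof.
  intros HE HL. pose proof HE as (_&_&Hcp&_).
  apply (Hcp d (fun i j => basis_op i j)); auto. split.
  - unfold psd_block. cbv beta. set (f := fun x : nat * nat => basis_vec (fst x) (snd x)).
    replace (fun ia jb : nat * nat => basis_op (fst ia) (fst jb) (snd ia) (snd jb))
      with (fun x y => f x * Cconj (f y))%C.
    apply psd_rank1.
    apply functional_extensionality; intros x; apply functional_extensionality; intros y.
    unfold f, basis_op, basis_vec. destruct (Nat.eqb (snd y) (fst y)); apply injective_projections; simpl; ring.
  - apply ex_series_finite with d. intros n Hn. apply fold_sum_zero. intros i Hi.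
    apply in_seq in Hi. unfold basis_op, basis_vec. destruct (Nat.eqb_spec n i). lia. simpl. ring.
Qed.

Lemma psd_E E X : U1_operation E -> pos_tc X -> psd_on (fun _ => True) (E X).
Proof.
  intros HE HX. pose proof HE as (_&_&Hcp&_).
  assert (H1 : psd_block 1 (fun _ _ => E X)).
  { apply Hcp. split.
    - unfold psd_block. intros L _. cbv beta.
      rewrite (qform_map X (@snd nat nat)). apply HX. apply List.Forall_forall. auto.
    - eapply ex_series_ext. 2: apply HX. intros n. simpl. ring. }
  intros l _. specialize (H1 (map (fun p => ((0%nat, fst p), snd p)) l)).
  unfold psd_block in H1. rewrite (qform_map (E X) (@snd nat nat)), map_map in H1.
  simpl in H1. rewrite map_ext with (g := fun x => x) in H1 by (intros [? ?]; reflexivity).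
  rewrite map_id in H1. apply H1. apply List.Forall_forall. intros x Hx.
  apply in_map_iff in Hx. destruct Hx as (y&<-&_). simpl. lia.
Qed.

Lemma E_basis_op_diag_nonneg E n a : U1_operation E -> 0 <= Re (E (basis_op n n) a a).
Proof. intros HE. pose proof (psd_E E _ HE (basis_op_diag_pos n) ((a, RtoC 1) :: nil)) as [_ H].
  repeat constructor. rewrite qform_single in H. lra. Qed.

Lemma E_basis_op_trace E n : deterministic_U1_operation E -> is_series (fun a => Re (E (basis_op n n) a a)) 1.
Proof. intros [HE Hdet].
  assert (Ht : has_trace (basis_op n n) (RtoC 1)).
  { unfold has_trace. apply is_series_C. split.
    - simpl. replace 1 with (psum (fun k => fst (basis_op n n k k)) (S n)).
      + apply is_series_finite. intros k Hk. unfold basis_op, basis_vec. destruct (Nat.eqb_spec k n). lia. simpl. ring.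
      + change (psum (fun k => fst (basis_op n n k k)) n + fst (basis_op n n n n) = 1).
        rewrite (psum_ext _ (fun _ => 0)).
        * assert (Hz : forall m, psum (fun _ => 0) m = 0) by (induction m; simpl; [ring| rewrite IHm; ring]).
          rewrite Hz. unfold basis_op, basis_vec. rewrite Nat.eqb_refl. simpl. ring.
        * intros i Hi. unfold basis_op, basis_vec. destruct (Nat.eqb_spec i n). lia. simpl. ring.
    - simpl. eapply is_series_extR. 2: apply is_series_zero. intros k. unfold basis_op, basis_vec.
      destruct (Nat.eqb k n); simpl; ring. }
  pose proof (Hdet _ _ (basis_op_tc n n) Ht) as H. apply is_series_C in H. apply H. Qed.

Definition quad2 (H : Op) a b s t := Re (qform H ((a, RtoC s) :: (b, RtoC t) :: nil)).

Lemma quad2_expand H a b s t : quad2 H a b s t =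
  s*s*Re (H a a) + s*t*Re (H a b) + t*s*Re (H b a) + t*t*Re (H b b).
Proof. apply qform_pair_Re. Qed.

Lemma quad2_diag H c : quad2 H c c 1 0 = Re (H c c).
Proof. rewrite quad2_expand. ring. Qed.

Lemma quad2_comb H1 H2 K1 K2 (c1 c2 : R) a b s t :
  (forall i j, (H1 i j + RtoC c1 * H2 i j = K1 i j + RtoC c2 * K2 i j)%C) ->
  quad2 H1 a b s t + c1 * quad2 H2 a b s t = quad2 K1 a b s t + c2 * quad2 K2 a b s t.
Proof. intros H. rewrite !quad2_expand.
  assert (R1 : forall i j, Re (H1 i j) + c1 * Re (H2 i j) = Re (K1 i j) + c2 * Re (K2 i j)).
  { intros i j. specialize (H i j). apply (f_equal Re) in H. rewrite !re_plus, !re_scal_l in H. exact H. }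
  transitivity (s*s*(Re (H1 a a) + c1 * Re (H2 a a)) + s*t*(Re (H1 a b) + c1 * Re (H2 a b))
      + t*s*(Re (H1 b a) + c1 * Re (H2 b a)) + t*t*(Re (H1 b b) + c1 * Re (H2 b b))). ring.
  rewrite !R1. ring. Qed.

Lemma quad2_scal H K (c : R) a b s t : (forall i j, H i j = (RtoC c * K i j)%C) ->
  quad2 H a b s t = c * quad2 K a b s t.
Proof. intros Hh. rewrite !quad2_expand, !Hh, !re_scal_l. ring. Qed.

Lemma quad2_E_nonneg E X a b s t : U1_operation E -> pos_tc X -> 0 <= quad2 (E X) a b s t.
Proof. intros HE HX. apply (psd_E E X HE HX). repeat constructor. Qed.

Lemma E_outer_diag_bound E u l a : deterministic_U1_operation E -> is_series (fun n => u n * u n) l ->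
  0 <= Re (E (outer u) a a) <= l.
Proof. intros [HE Hdet] Hu.
  assert (Hpos : forall n, 0 <= Re (E (outer u) n n)).
  { intros n. pose proof (psd_E E _ HE (outer_pos u l Hu) ((n, RtoC 1) :: nil)) as H.
    destruct H as [_ H]. repeat constructor. rewrite qform_single in H. lra. }
  split. auto.
  pose proof (Hdet _ _ (outer_tc u l Hu) (outer_trace u l Hu)) as Ht.
  apply is_series_C in Ht. destruct Ht as [Ht _].
  apply (term_le_series (fun n => Re (E (outer u) n n))); auto. Qed.

Lemma quad2_E_outer_bound E u l a b s t : deterministic_U1_operation E -> is_series (fun n => u n * u n) l ->
  quad2 (E (outer u)) a b s t <= 2 * (s*s + t*t) * l.
Proof. intros HD Hu. pose proof HD as [HE _].
  pose proof (quad2_E_nonneg E (outer u) a b s (-t) HE (outer_pos u l Hu)) as H1.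
  pose proof (E_outer_diag_bound E u l a HD Hu). pose proof (E_outer_diag_bound E u l b HD Hu).
  rewrite quad2_expand in *.
  assert (0 <= s*s) by nra. assert (0 <= t*t) by nra. nra. Qed.

(** * Truncation estimates *)

Definition sqrt_head (p : nat -> R) N i := if Nat.ltb i N then sqrt (p i) else 0.

Definition sqrt_tail (p : nat -> R) N i := if Nat.ltb i N then 0 else sqrt (p i).

Definition sqrt_vec (p : nat -> R) i := sqrt (p i).

Lemma proj_sqrt_outer p : proj_sqrt p = outer (sqrt_vec p).
Proof. reflexivity. Qed.

Lemma sqrt_vec_split p N i : sqrt_vec p i = sqrt_head p N i + sqrt_tail p N i.
Proof. unfold sqrt_vec, sqrt_head, sqrt_tail. destruct (Nat.ltb i N); ring. Qed.

Lemma sqrt_head_tail_disjoint p N i : sqrt_head p N i * sqrt_tail p N i = 0.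
Proof. unfold sqrt_head, sqrt_tail. destruct (Nat.ltb i N); ring. Qed.

Lemma series_sqrt_vec p : (forall n, 0 <= p n) -> is_series p 1 -> is_series (fun n => sqrt_vec p n * sqrt_vec p n) 1.
Proof. intros hp H. eapply is_series_ext. 2: exact H. intros n. unfold sqrt_vec. rewrite sqrt_sqrt; auto. Qed.

Lemma series_sqrt_head p N : (forall n, 0 <= p n) -> is_series (fun n => sqrt_head p N n * sqrt_head p N n) (psum p N).
Proof. intros hp. replace (psum p N) with (psum (fun n => sqrt_head p N n * sqrt_head p N n) N).
  apply is_series_finite. intros n Hn. unfold sqrt_head. destruct (Nat.ltb_spec n N). lia. ring.
  apply psum_ext. intros i Hi. unfold sqrt_head. destruct (Nat.ltb_spec i N). 2: lia. apply sqrt_sqrt; auto. Qed.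

Lemma series_sqrt_tail p N : (forall n, 0 <= p n) -> is_series p 1 -> is_series (fun n => sqrt_tail p N n * sqrt_tail p N n) (1 - psum p N).
Proof. intros hp H. eapply is_series_ext. 2: apply (is_series_minusR _ _ _ _ H (series_sqrt_head p N hp)).
  intros n. simpl. unfold sqrt_head, sqrt_tail. destruct (Nat.ltb n N). rewrite sqrt_sqrt; auto. ring.
  rewrite sqrt_sqrt; auto. ring. Qed.

Lemma series_sqrt_head_tail_comb p N (al be : R) : (forall n, 0 <= p n) -> is_series p 1 ->
  is_series (fun n => (al * sqrt_head p N n + be * sqrt_tail p N n) * (al * sqrt_head p N n + be * sqrt_tail p N n))
    (al*al*psum p N + be*be*(1 - psum p N)).
Proof. intros hp H. eapply is_series_extR.
  2: apply (is_series_plusR _ _ _ _ (is_series_scalR (al*al) _ _ (series_sqrt_head p N hp))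
                                    (is_series_scalR (be*be) _ _ (series_sqrt_tail p N hp H))).
  intros n. cbv beta. pose proof (sqrt_head_tail_disjoint p N n) as H0. revert H0. generalize (sqrt_head p N n) (sqrt_tail p N n).
  intros x y H0. transitivity (al*al*(x*x) + be*be*(y*y) + 2*al*be*(x*y)).
  rewrite H0. ring. ring. Qed.

(* (u + v)(u + v)^T + (lam^-2 - 1) v v^T = (lam u + lam^-1 v)(...)^T + (1 - lam^2) u u^T
   for u, v of disjoint supports. *)
Lemma quad2_E_head_le E p N (lam : R) a b s t : U1_operation E -> (forall n, 0 <= p n) -> is_series p 1 ->
  0 < lam <= 1 ->
  (1 - lam*lam) * quad2 (E (outer (sqrt_head p N))) a b s t <=
  quad2 (E (proj_sqrt p)) a b s t + (1/(lam*lam) - 1) * quad2 (E (outer (sqrt_tail p N))) a b s t.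
Proof. intros HE hp H1 Hl.
  set (w := fun n => lam * sqrt_head p N n + (1/lam) * sqrt_tail p N n).
  assert (Hw : pos_tc (outer w)) by (eapply outer_pos; apply series_sqrt_head_tail_comb; auto).
  rewrite proj_sqrt_outer.
  assert (Hid : forall i j, (outer (sqrt_vec p) i j + RtoC (1/(lam*lam) - 1) * outer (sqrt_tail p N) i j =
                 outer w i j + RtoC (1 - lam*lam) * outer (sqrt_head p N) i j)%C).
  { intros i j; unfold outer, w. rewrite (sqrt_vec_split p N i), (sqrt_vec_split p N j).
    rewrite <- !RtoC_mult, <- !RtoC_plus. f_equal.
    pose proof (sqrt_head_tail_disjoint p N i); pose proof (sqrt_head_tail_disjoint p N j). field. lra. }
  pose proof (E_comb E _ _ _ _ _ _ HE (outer_tc _ _ (series_sqrt_vec p hp H1)) (outer_tc _ _ (series_sqrt_tail p N hp H1))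
     (trace_class_pos _ Hw) (outer_tc _ _ (series_sqrt_head p N hp)) Hid) as Heq.
  pose proof (quad2_comb _ _ _ _ _ _ a b s t Heq).
  pose proof (quad2_E_nonneg E (outer w) a b s t HE Hw). nra. Qed.

(* (u + v)(u + v)^T + (lam u - lam^-1 v)(...)^T = (1 + lam^2) u u^T + (1 + lam^-2) v v^T. *)
Lemma quad2_E_le_head_tail E p N (lam : R) a b s t : U1_operation E -> (forall n, 0 <= p n) -> is_series p 1 ->
  0 < lam ->
  quad2 (E (proj_sqrt p)) a b s t <=
  (1 + lam*lam) * quad2 (E (outer (sqrt_head p N))) a b s t + (1 + 1/(lam*lam)) * quad2 (E (outer (sqrt_tail p N))) a b s t.
Proof. intros HE hp H1 Hl.
  set (w := fun n => lam * sqrt_head p N n + (- (1/lam)) * sqrt_tail p N n).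
  assert (Hw : pos_tc (outer w)) by (eapply outer_pos; apply series_sqrt_head_tail_comb; auto).
  set (Y1 := fun i j => (RtoC (1 + lam*lam) * outer (sqrt_head p N) i j)%C).
  assert (HY1 : trace_class Y1).
  { apply trace_class_scal. nra. eapply outer_tc. apply series_sqrt_head; auto. }
  rewrite proj_sqrt_outer.
  assert (Hid : forall i j, (outer (sqrt_vec p) i j + RtoC 1 * outer w i j =
                 Y1 i j + RtoC (1 + 1/(lam*lam)) * outer (sqrt_tail p N) i j)%C).
  { intros i j; unfold Y1, outer, w. rewrite (sqrt_vec_split p N i), (sqrt_vec_split p N j).
    rewrite <- !RtoC_mult, <- !RtoC_plus. f_equal.
    pose proof (sqrt_head_tail_disjoint p N i); pose proof (sqrt_head_tail_disjoint p N j). field. lra. }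
  pose proof (E_comb E _ _ _ _ _ _ HE (outer_tc _ _ (series_sqrt_vec p hp H1)) (trace_class_pos _ Hw)
     HY1 (outer_tc _ _ (series_sqrt_tail p N hp H1)) Hid) as Heq.
  pose proof (quad2_comb _ _ _ _ _ _ a b s t Heq).
  pose proof (quad2_E_nonneg E (outer w) a b s t HE Hw).
  assert (HS : quad2 (E Y1) a b s t = (1 + lam*lam) * quad2 (E (outer (sqrt_head p N))) a b s t).
  { apply quad2_scal. intros i j. unfold Y1. rewrite (E_scal E _ _ HE). reflexivity.
    eapply outer_tc. apply series_sqrt_head; auto. }
  nra. Qed.

Definition head_outer_term (p : nat -> R) (mn : nat * nat) : Op :=
  fun i j => (RtoC (sqrt (p (fst mn)) * sqrt (p (snd mn))) * basis_op (fst mn) (snd mn) i j)%C.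

Lemma head_outer_term_tc p mn : trace_class (head_outer_term p mn).
Proof. apply trace_class_scal. apply Rmult_le_pos; apply sqrt_pos. apply basis_op_tc. Qed.

Lemma head_outer_expand p N : outer (sqrt_head p N) = (fun i j => lsum (fun mn => head_outer_term p mn i j) (list_prod (seq 0 N) (seq 0 N))).
Proof. apply Op_ext. intros i j. rewrite lsum_prod. unfold head_outer_term, basis_op. simpl.
  transitivity (lsum (fun x => (RtoC (sqrt (p x)) * lsum (fun y => RtoC (sqrt (p y)) * basis_vec y j) (seq 0 N)) * basis_vec x i)%C (seq 0 N)).
  2:{ apply lsum_ext. intros. rewrite <- lsum_scal, <- lsum_scal_r. apply lsum_ext. intros.
      rewrite RtoC_mult. ring. }
  rewrite lsum_ind_seq. rewrite lsum_ind_seq. unfold outer, sqrt_head.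
  destruct (Nat.ltb i N), (Nat.ltb j N); try (rewrite RtoC_mult; reflexivity);
    apply injective_projections; simpl; ring. Qed.

Lemma E_head_entry E p N a b : U1_operation E ->
  E (outer (sqrt_head p N)) a b = lsum (fun mn => RtoC (sqrt (p (fst mn)) * sqrt (p (snd mn))) * E (basis_op (fst mn) (snd mn)) a b)%C
    (list_prod (seq 0 N) (seq 0 N)).
Proof. intros HE. rewrite head_outer_expand. destruct (E_lsum E (head_outer_term p) (list_prod (seq 0 N) (seq 0 N)) HE) as [_ H].
  intros; apply head_outer_term_tc. rewrite H. apply lsum_ext. intros mn _. unfold head_outer_term.
  rewrite (E_scal E _ _ HE (basis_op_tc _ _)). reflexivity. Qed.

Definition choi (E : Op -> Op) : nat * nat -> nat * nat -> C :=
  fun x y => E (basis_op (fst x) (fst y)) (snd x) (snd y).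

Definition head_coords (p : nat -> R) N (c : nat) (r : R) : list ((nat * nat) * C) :=
  map (fun m => ((m, c), RtoC (r * sqrt (p m)))) (seq 0 N).

Lemma sesq_head_coords E p N c1 c2 r1 r2 : U1_operation E ->
  sesq (choi E) (head_coords p N c1 r1) (head_coords p N c2 r2) = (RtoC (r1 * r2) * E (outer (sqrt_head p N)) c1 c2)%C.
Proof. intros HE. rewrite (E_head_entry E p N c1 c2 HE), lsum_prod. unfold sesq, head_coords.
  rewrite lsum_map, <- lsum_scal. apply lsum_ext. intros m _. rewrite lsum_map, <- lsum_scal.
  apply lsum_ext. intros n _. simpl. unfold choi. simpl. destruct (E (basis_op m n) c1 c2).
  apply injective_projections; simpl; ring. Qed.

Lemma quad2_E_head_sesq E p N a b s t : U1_operation E ->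
  quad2 (E (outer (sqrt_head p N))) a b s t = Re (sesq (choi E) (head_coords p N a s ++ head_coords p N b t) (head_coords p N a s ++ head_coords p N b t)).
Proof. intros HE. rewrite !sesq_app_l, !sesq_app_r, !sesq_head_coords by auto. rewrite quad2_expand.
  rewrite !re_plus, !re_scal_l. ring. Qed.

(* Covariance makes the Choi matrix block diagonal along the classes m - a = const, and both
   (m0, a) and (n0, b) lie in one class, so their 2 x 2 principal part is dominated by the
   quadratic form of the head. *)
Lemma quad2_E_pair_le_head E p N a b m0 n0 s t : U1_operation E -> (a + n0 = b + m0)%nat -> (m0 < N)%nat -> (n0 < N)%nat ->
  let sm := s * sqrt (p m0) in let tn := t * sqrt (p n0) in
  let g := sm*sm*Re (E (basis_op m0 m0) a a) + sm*tn*Re (E (basis_op m0 n0) a b) +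
           tn*sm*Re (E (basis_op n0 m0) b a) + tn*tn*Re (E (basis_op n0 n0) b b) in
  0 <= g /\ g <= quad2 (E (outer (sqrt_head p N))) a b s t.
Proof.
  intros HE Hk HmN HnN sm tn g.
  set (P := fun x : nat * nat => Nat.eqb (fst x + a) (m0 + snd x)).
  set (L := head_coords p N a s ++ head_coords p N b t).
  assert (HL : List.Forall (fun ax : (nat*nat)*C => (fst (fst ax) < N)%nat) L).
  { apply List.Forall_forall. intros x Hx. unfold L, head_coords in Hx. apply in_app_iff in Hx.
    destruct Hx as [Hx|Hx]; apply in_map_iff in Hx; destruct Hx as (m&<-&Hm); apply in_seq in Hm; simpl; lia. }
  assert (HL1 : filter (fun z => P (fst z)) L = ((m0, a), RtoC sm) :: ((n0, b), RtoC tn) :: nil).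
  { unfold L, head_coords. rewrite filter_app, !filter_map.
    rewrite (filter_seq_one _ m0 N), (filter_seq_one _ n0 N); auto.
    - intros n. unfold P. simpl. destruct (Nat.eqb_spec (n + a) (m0 + b)), (Nat.eqb_spec n n0); auto; lia.
    - intros m. unfold P. simpl. destruct (Nat.eqb_spec (m + a) (m0 + a)), (Nat.eqb_spec m m0); auto; lia. }
  assert (Hg : g = Re (qform (choi E) (((m0, a), RtoC sm) :: ((n0, b), RtoC tn) :: nil))).
  { rewrite qform_pair_Re. unfold choi. simpl. unfold g. ring. }
  split.
  - rewrite Hg. apply (choi_psd E (S (max m0 n0))). auto. constructor; [simpl; lia|constructor; [simpl; lia|constructor]].
  - rewrite quad2_E_head_sesq by auto. fold L. rewrite (sesq_split_block (choi E) P L).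
    + rewrite HL1, re_plus, <- !qform_sesq, <- Hg.
      assert (0 <= Re (qform (choi E) (filter (fun z => negb (P (fst z))) L))).
      { apply (choi_psd E N). auto. apply List.Forall_forall. intros x Hx. apply filter_In in Hx.
        rewrite List.Forall_forall in HL. apply HL. apply Hx. }
      lra.
    + intros [x1 x2] [y1 y2] Hx Hy. unfold P in Hx, Hy. simpl in Hx, Hy.
      apply Nat.eqb_eq in Hx. apply Nat.eqb_neq in Hy. unfold choi. simpl.
      split; apply E_basis_op_offdiag; auto; lia.
Qed.

(** * From a conversion to a shift mixture *)

Definition transfer (E : Op -> Op) (p : nat -> R) m c := p m * Re (E (basis_op m m) c c).

Lemma E_head_diag E p N c : U1_operation E -> (forall n, 0 <= p n) ->
  Re (E (outer (sqrt_head p N)) c c) = psum (fun m => transfer E p m c) N.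
Proof. intros HE hp. rewrite (E_head_entry E p N c c HE), lsum_prod, Re_lsum_seq.
  apply psum_ext. intros m Hm. rewrite (lsum_seq_single _ m N Hm).
  - cbn [fst snd]. rewrite re_scal_l, sqrt_sqrt by auto. reflexivity.
  - intros n Hn. cbn [fst snd]. rewrite (E_basis_op_offdiag E m n c c HE) by lia. ring. Qed.

Lemma transfer_pair_sandwich E p a b m0 n0 : U1_operation E -> (forall n, 0 <= p n) ->
  (a + n0 = b + m0)%nat ->
  exists B, forall s t N, (m0 < N)%nat -> (n0 < N)%nat ->
    0 <= transfer E p m0 a*s*s + B*s*t + transfer E p n0 b*t*t <=
         quad2 (E (outer (sqrt_head p N))) a b s t.
Proof.
  intros HE hp Hk.
  exists (sqrt (p m0) * sqrt (p n0) * (Re (E (basis_op m0 n0) a b) + Re (E (basis_op n0 m0) b a))).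
  intros s t N H1 H2. destruct (quad2_E_pair_le_head E p N a b m0 n0 s t HE Hk H1 H2) as [G1 G2].
  unfold transfer. pose proof (sqrt_sqrt (p m0) (hp m0)) as Hm. pose proof (sqrt_sqrt (p n0) (hp n0)) as Hn.
  set (sm := sqrt (p m0)) in *. set (sn := sqrt (p n0)) in *. rewrite <- Hm, <- Hn. cbv zeta in G1, G2.
  split; [eapply Rle_trans; [exact G1|] | eapply Rle_trans; [|exact G2]]; right; ring.
Qed.

Section Forward.

Variables (p q : nat -> R) (E : Op -> Op).
Hypotheses (hp : forall n, 0 <= p n) (hq : forall n, 0 <= q n) (hp1 : is_series p 1)
  (HD : deterministic_U1_operation E) (Hpq : E (proj_sqrt p) = proj_sqrt q).

Let HE : U1_operation E. Proof. exact (proj1 HD). Qed.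

Lemma transfer_nonneg m c : 0 <= transfer E p m c.
Proof. apply Rmult_le_pos; auto. apply E_basis_op_diag_nonneg, HE. Qed.

Lemma transfer_row_series n : is_series (fun c => transfer E p n c) (p n).
Proof.
  pose proof (is_series_scalR (p n) _ _ (E_basis_op_trace E n HD)) as H.
  rewrite Rmult_1_r in H. exact H.
Qed.

(* The vector (sqrt q_b, - sqrt q_a) is annihilated by |phi><phi|; the sandwich squeezes
   the pair form to zero there, and a nonnegative binary form vanishing at (x, y) has
   A x^2 = C y^2. *)
Lemma transfer_balance a b m0 n0 : (a + n0 = b + m0)%nat ->
  transfer E p m0 a * q b = transfer E p n0 b * q a.
Proof.
  intros Hk. destruct (transfer_pair_sandwich E p a b m0 n0 HE hp Hk) as [B Hg].
  set (x := sqrt (q b)). set (y := - sqrt (q a)).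
  assert (Hx : x * x = q b) by (apply sqrt_sqrt; auto).
  assert (Hy : y * y = q a) by (unfold y; rewrite Rmult_opp_opp; apply sqrt_sqrt; auto).
  assert (Hrho : quad2 (E (proj_sqrt p)) a b x y = 0).
  { rewrite Hpq, quad2_expand. unfold proj_sqrt. rewrite !re_RtoC. unfold y.
    fold x. assert (sqrt (q a) * sqrt (q a) = q a) by (apply sqrt_sqrt; auto). nra. }
  assert (Hle : transfer E p m0 a*x*x + B*x*y + transfer E p n0 b*y*y <= 0).
  { apply (le0_of_le_tail p _ (8 * (x*x + y*y)) (S (max m0 n0))). auto. nra.
    intros N HN. destruct (Hg x y N ltac:(lia) ltac:(lia)) as [_ G2].
    pose proof (quad2_E_head_le E p N (1/2) a b x y HE hp hp1 ltac:(lra)) as HII.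
    pose proof (quad2_E_outer_bound E (sqrt_tail p N) (1 - psum p N) a b x y HD
      (series_sqrt_tail p N hp hp1)) as Hb.
    rewrite Hrho in HII. replace (1 / (1/2 * (1/2)) - 1) with 3 in HII by field. nra. }
  pose proof (binary_form_null_balanced _ B _ x y
    (fun s t => proj1 (Hg s t (S (max m0 n0)) ltac:(lia) ltac:(lia))) Hle).
  rewrite <- Hx, <- Hy. nra.
Qed.

Lemma transfer_head_close c N d : 0 < d <= 1/2 ->
  Rabs (psum (fun m => transfer E p m c) N - q c) <= 2 * d * q c + 4 * (1 - psum p N) / d.
Proof.
  intros [Hd0 Hd1].
  assert (Hrho : Re (E (proj_sqrt p) c c) = q c).
  { rewrite Hpq. unfold proj_sqrt. rewrite re_RtoC. apply sqrt_sqrt; auto. }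
  set (tau := 1 - psum p N).
  set (lam := sqrt d). assert (Hlam : lam * lam = d) by (apply sqrt_sqrt; lra).
  assert (Hlam0 : 0 < lam) by (apply sqrt_lt_R0; lra).
  assert (Hlam1 : lam <= 1) by (destruct (Rle_or_lt lam 1); auto; nra).
  pose proof (quad2_E_head_le E p N lam c c 1 0 HE hp hp1 (conj Hlam0 Hlam1)) as HII.
  pose proof (quad2_E_le_head_tail E p N lam c c 1 0 HE hp hp1 Hlam0) as HI.
  rewrite !quad2_diag in HII, HI. rewrite Hrho, Hlam, (E_head_diag E p N c HE hp) in HII, HI.
  pose proof (E_outer_diag_bound E (sqrt_tail p N) tau c HD (series_sqrt_tail p N hp hp1)) as [Hr0 Hr1].
  set (P := psum (fun m => transfer E p m c) N) in *.
  set (T := Re (E (outer (sqrt_tail p N)) c c)) in *.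
  set (K := 1 / d) in *. assert (HK : d * K = 1) by (unfold K; field; lra).
  assert (HK2 : 2 <= K) by (unfold K; apply Rmult_le_reg_r with d; [lra | field_simplify; lra]).
  assert (HP : 0 <= P) by (apply psum_nonneg; intros; apply transfer_nonneg).
  assert (Hq : 0 <= q c) by auto.
  assert (HKT : K * T <= K * tau) by (apply Rmult_le_compat_l; lra).
  replace (4 * tau / d) with (4 * (K * tau)) by (unfold K; field; lra).
  apply Rabs_le. split; nra.
Qed.

Lemma transfer_col_series c : is_series (fun m => transfer E p m c) (q c).
Proof.
  apply is_series_psum, is_lim_seq_spec. intros eps. pose proof (cond_pos eps) as Heps.
  set (d := Rmin (1/2) (eps / (4 * (q c + 1)))).
  assert (Hq : 0 <= q c) by auto.
  assert (Hd0 : 0 < d) by (apply Rmin_pos; [lra | apply Rdiv_lt_0_compat; lra]).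
  assert (Hd1 : d <= 1/2) by apply Rmin_l.
  assert (Hdq : 2 * d * q c < eps / 2).
  { assert (d * (4 * (q c + 1)) <= eps).
    { apply Rle_trans with (eps / (4 * (q c + 1)) * (4 * (q c + 1))).
      apply Rmult_le_compat_r; [lra | apply Rmin_r]. right; field; lra. }
    nra. }
  destruct (psum_tail_small p hp1 (eps * d / 8)) as [N0 HN0].
  { apply Rmult_lt_0_compat; [apply Rmult_lt_0_compat|]; lra. }
  exists N0. intros N HN. specialize (HN0 N HN). apply Rabs_lt_between in HN0.
  eapply Rle_lt_trans. apply (transfer_head_close c N d (conj Hd0 Hd1)).
  assert (4 * (1 - psum p N) / d < eps / 2).
  { apply Rmult_lt_reg_r with d. lra. field_simplify; lra. }
  lra.
Qed.

Section Weight.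

Variable b0 : nat.
Hypothesis Hb0 : 0 < q b0.

(* w_k is read off the column b0 of the transfer matrix. *)
Definition shift_weight (k : Z) : R :=
  if (Z.of_nat b0 + k <? 0)%Z then 0 else transfer E p (Z.to_nat (Z.of_nat b0 + k)) b0 / q b0.

Lemma shift_weight_nonneg k : 0 <= shift_weight k.
Proof.
  unfold shift_weight. destruct (Z.ltb_spec (Z.of_nat b0 + k) 0). lra.
  apply Rmult_le_pos. apply transfer_nonneg. left. apply Rinv_0_lt_compat. auto.
Qed.

Lemma shift_weight_series : is_series (fun n => shift_weight (Z.of_nat n - Z.of_nat b0)) 1.
Proof.
  eapply is_series_ext_eq. 2: apply (is_series_scalR (/ q b0) _ _ (transfer_col_series b0)).
  - intros n. unfold shift_weight.
    destruct (Z.ltb_spec (Z.of_nat b0 + (Z.of_nat n - Z.of_nat b0)) 0). lia.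
    replace (Z.to_nat (Z.of_nat b0 + (Z.of_nat n - Z.of_nat b0))) with n by lia.
    unfold Rdiv. apply Rmult_comm.
  - apply Rinv_l. lra.
Qed.

Lemma shift_weight_sumZ : is_sumZ shift_weight 1.
Proof.
  apply (is_sumZ_shift shift_weight b0). 2: exact shift_weight_series.
  intros k Hk. unfold shift_weight. destruct (Z.ltb_spec (Z.of_nat b0 + k) 0). auto. lia.
Qed.

Lemma shift_weight_le1 k : shift_weight k <= 1.
Proof.
  destruct (Z.ltb_spec (Z.of_nat b0 + k) 0).
  - unfold shift_weight. destruct (Z.ltb_spec (Z.of_nat b0 + k) 0). lra. lia.
  - replace k with (Z.of_nat (Z.to_nat (Z.of_nat b0 + k)) - Z.of_nat b0)%Z by lia.
    apply (term_le_series (fun n => shift_weight (Z.of_nat n - Z.of_nat b0)) 1).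
    intros; apply shift_weight_nonneg. exact shift_weight_series.
Qed.

(* Column a is q_a / q_b0 times column b0 shifted by a - b0 (transfer_balance); the
   entries above the shift then carry no mass. *)
Lemma transfer_zero_above n a : (n + b0 < a)%nat -> transfer E p n a = 0.
Proof.
  intros Hlt. pose proof (transfer_nonneg n a) as Hn0.
  destruct (hq a) as [Hqa|Hqa].
  - set (c := (a - b0)%nat).
    pose proof (is_series_tail _ _ c (transfer_col_series a)) as Ht.
    assert (Ht2 : is_series (fun k => transfer E p (c + k)%nat a) (q b0 * (q a / q b0))).
    { eapply is_series_ext_eq. 2: apply (is_series_scalR (q a / q b0) _ _ (transfer_col_series b0)).
      - intros k. pose proof (transfer_balance a b0 (c + k)%nat k ltac:(unfold c; lia)) as Hbal.
        apply Rmult_eq_reg_r with (q b0). 2: lra. rewrite Hbal. field. lra.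
      - apply Rmult_comm. }
    pose proof (is_series_uniq _ _ _ Ht Ht2) as Hc.
    assert (Hps : psum (fun m => transfer E p m a) c = 0) by (field_simplify in Hc; lra).
    pose proof (term_le_psum (fun m => transfer E p m a) n c (fun k => transfer_nonneg k a)
      ltac:(unfold c; lia)). simpl in *. lra.
  - pose proof (term_le_series (fun m => transfer E p m a) (q a) n
      (fun k => transfer_nonneg k a) (transfer_col_series a)). simpl in *. lra.
Qed.

Lemma transfer_eq_shift_weight n a :
  transfer E p n a = shift_weight (Z.of_nat n - Z.of_nat a) * q a.
Proof.
  unfold shift_weight. destruct (Z.ltb_spec (Z.of_nat b0 + (Z.of_nat n - Z.of_nat a)) 0).
  - rewrite Rmult_0_l. apply transfer_zero_above. lia.
  - replace (Z.to_nat (Z.of_nat b0 + (Z.of_nat n - Z.of_nat a))) with (n + b0 - a)%nat by lia.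
    pose proof (transfer_balance a b0 n (n + b0 - a)%nat ltac:(lia)) as Hbal.
    apply Rmult_eq_reg_r with (q b0). 2: lra. rewrite Hbal. field. lra.
Qed.

Lemma shift_weight_mixture m : is_sumZ (fun k => shift_weight k * Upsilon k q m) (p m).
Proof.
  apply (is_sumZ_reflect_shift _ m).
  - intros k Hk. unfold Upsilon, extZ. destruct (Z.ltb_spec (Z.of_nat m - k) 0). ring. lia.
  - eapply is_series_ext. 2: apply (transfer_row_series m). intros a.
    rewrite transfer_eq_shift_weight. unfold Upsilon, extZ.
    destruct (Z.ltb_spec (Z.of_nat m - (Z.of_nat m - Z.of_nat a)) 0). lia.
    do 2 f_equal. lia.
Qed.

End Weight.

End Forward.

(** * Shift channels *)

Definition amp_bounded (A : nat -> nat -> R) := forall n a, 0 <= A n a <= 1.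

Definition kraus_vanish (a b : nat) (k : Z) : bool := orb (Z.of_nat a + k <? 0)%Z (Z.of_nat b + k <? 0)%Z.

(* Entry (a, b) of K_k X K_k^dagger for K_k = sum_a A (a + k) a |a><a + k|; it vanishes when
   a + k or b + k is negative. *)
Definition kraus_term (A : nat -> nat -> R) (F : nat -> nat -> C) (a b : nat) (k : Z) : C :=
  if kraus_vanish a b k then 0%C
  else (RtoC (A (Z.to_nat (Z.of_nat a + k)) a) * F (Z.to_nat (Z.of_nat a + k)) (Z.to_nat (Z.of_nat b + k))
        * RtoC (A (Z.to_nat (Z.of_nat b + k)) b))%C.

Definition kraus_terms A F a b (j : nat) : C := (kraus_term A F a b (Z.of_nat j) + kraus_term A F a b (- Z.of_nat (S j)))%C.

Definition shift_channel A (X : Op) : Op := fun a b => Series_C (kraus_terms A X a b).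

Definition entry_bound (G : nat -> nat -> C) (D1 D2 : nat -> R) : Prop :=
  (forall n, 0 <= D1 n) /\ (forall n, 0 <= D2 n) /\ ex_series D1 /\ ex_series D2 /\
  forall n m, Rabs (Re (G n m)) <= (D1 n + D2 m) / 2 /\ Rabs (Im (G n m)) <= (D1 n + D2 m) / 2.

Lemma extZ_nonneg D x : (forall n, 0 <= D n) -> 0 <= extZ D x.
Proof. intros H. unfold extZ. destruct (x <? 0)%Z. lra. auto. Qed.

Lemma kraus_term_bound A F a b k (proj : C -> R) D1 D2 : amp_bounded A ->
  (forall n, 0 <= D1 n) -> (forall n, 0 <= D2 n) ->
  (forall n m, Rabs (proj (F n m)) <= (D1 n + D2 m) / 2) ->
  (forall (z : C) (r s : R), proj (RtoC r * z * RtoC s)%C = r * s * proj z) ->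
  proj 0%C = 0 ->
  Rabs (proj (kraus_term A F a b k)) <= (extZ D1 (Z.of_nat a + k) + extZ D2 (Z.of_nat b + k)) / 2.
Proof. intros HA HD1 HD2 HF Hp Hp0.
  pose proof (extZ_nonneg D1 (Z.of_nat a + k) HD1). pose proof (extZ_nonneg D2 (Z.of_nat b + k) HD2).
  unfold kraus_term, kraus_vanish.
  destruct (Z.ltb_spec (Z.of_nat a + k) 0), (Z.ltb_spec (Z.of_nat b + k) 0); simpl;
    try (rewrite Hp0, Rabs_R0; lra).
  rewrite Hp. unfold extZ in *.
  destruct (Z.ltb_spec (Z.of_nat a + k) 0). lia. destruct (Z.ltb_spec (Z.of_nat b + k) 0). lia.
  specialize (HF (Z.to_nat (Z.of_nat a + k)) (Z.to_nat (Z.of_nat b + k))).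
  destruct (HA (Z.to_nat (Z.of_nat a + k)) a), (HA (Z.to_nat (Z.of_nat b + k)) b).
  rewrite !Rabs_mult, (Rabs_pos_eq (A _ a)), (Rabs_pos_eq (A _ b)) by lra.
  assert (0 <= A (Z.to_nat (Z.of_nat a + k)) a * A (Z.to_nat (Z.of_nat b + k)) b <= 1) by (split; nra).
  pose proof (Rabs_pos (proj (F (Z.to_nat (Z.of_nat a + k)) (Z.to_nat (Z.of_nat b + k))))). nra.
Qed.

Lemma Re_scal_lr (z : C) (r s : R) : Re (RtoC r * z * RtoC s)%C = r * s * Re z.
Proof. destruct z. unfold Re; simpl. ring. Qed.

Lemma Im_scal_lr (z : C) (r s : R) : Im (RtoC r * z * RtoC s)%C = r * s * Im z.
Proof. destruct z. unfold Im; simpl. ring. Qed.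

Lemma kraus_terms_conv A F a b D1 D2 : amp_bounded A -> entry_bound F D1 D2 -> ex_series_C (kraus_terms A F a b).
Proof. intros HA (HD1&HD2&HS1&HS2&HF).
  set (B := fun j : nat => (D1 (a + j)%nat + D2 (b + j)%nat) / 2 +
     (extZ D1 (Z.of_nat a - Z.of_nat (S j)) + extZ D2 (Z.of_nat b - Z.of_nat (S j))) / 2).
  assert (HB : ex_series B).
  { unfold B. apply ex_series_plusR.
    - apply (ex_series_divR (fun j => D1 (a + j)%nat + D2 (b + j)%nat)). apply ex_series_plusR; apply ex_series_shift; auto.
    - eexists. apply (is_series_finite _ (S (max a b))). intros n Hn. unfold extZ.
      destruct (Z.ltb_spec (Z.of_nat a - Z.of_nat (S n)) 0). 2: lia.
      destruct (Z.ltb_spec (Z.of_nat b - Z.of_nat (S n)) 0). 2: lia. lra. }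
  assert (Hz : forall D c j, extZ D (Z.of_nat c + Z.of_nat j) = D (c + j)%nat).
  { intros. unfold extZ. destruct (Z.ltb_spec (Z.of_nat c + Z.of_nat j) 0). lia. f_equal. lia. }
  split.
  - apply (ex_series_le_R _ B); auto. intros j. unfold kraus_terms. rewrite re_plus.
    eapply Rle_trans. apply Rabs_triang.
    pose proof (kraus_term_bound A F a b (Z.of_nat j) Re D1 D2 HA HD1 HD2 (fun n m => proj1 (HF n m)) Re_scal_lr eq_refl).
    pose proof (kraus_term_bound A F a b (- Z.of_nat (S j)) Re D1 D2 HA HD1 HD2 (fun n m => proj1 (HF n m)) Re_scal_lr eq_refl).
    rewrite !Hz in H. unfold B. replace (Z.of_nat a - Z.of_nat (S j))%Z with (Z.of_nat a + - Z.of_nat (S j))%Z by lia.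
    replace (Z.of_nat b - Z.of_nat (S j))%Z with (Z.of_nat b + - Z.of_nat (S j))%Z by lia. lra.
  - apply (ex_series_le_R _ B); auto. intros j. unfold kraus_terms. rewrite im_plus.
    eapply Rle_trans. apply Rabs_triang.
    pose proof (kraus_term_bound A F a b (Z.of_nat j) Im D1 D2 HA HD1 HD2 (fun n m => proj2 (HF n m)) Im_scal_lr eq_refl).
    pose proof (kraus_term_bound A F a b (- Z.of_nat (S j)) Im D1 D2 HA HD1 HD2 (fun n m => proj2 (HF n m)) Im_scal_lr eq_refl).
    rewrite !Hz in H. unfold B. replace (Z.of_nat a - Z.of_nat (S j))%Z with (Z.of_nat a + - Z.of_nat (S j))%Z by lia.
    replace (Z.of_nat b - Z.of_nat (S j))%Z with (Z.of_nat b + - Z.of_nat (S j))%Z by lia. lra.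
Qed.

Definition kraus_list {J} (A : nat -> nat -> R) (getn : J -> nat) (setn : J -> nat -> J) (k : Z) (L : list (J * C)) :=
  map (fun z => (setn (fst z) (Z.to_nat (Z.of_nat (getn (fst z)) + k)),
                 if (Z.of_nat (getn (fst z)) + k <? 0)%Z then RtoC 0
                 else (RtoC (A (Z.to_nat (Z.of_nat (getn (fst z)) + k)) (getn (fst z))) * snd z)%C)) L.

Lemma sesq_kraus_term {J} (A : nat -> nat -> R) (F : J -> J -> C) getn setn k (L : list (J * C)) :
  sesq (fun x y => kraus_term A (fun n m => F (setn x n) (setn y m)) (getn x) (getn y) k) L L =
  qform F (kraus_list A getn setn k L).
Proof. rewrite qform_sesq. unfold sesq, kraus_list. rewrite lsum_map. apply lsum_ext. intros x _.
  rewrite lsum_map. apply lsum_ext. intros y _. simpl. unfold kraus_term, kraus_vanish.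
  destruct (Z.ltb_spec (Z.of_nat (getn (fst x)) + k) 0), (Z.ltb_spec (Z.of_nat (getn (fst y)) + k) 0); simpl.
  - rewrite Cconj_R. ring.
  - rewrite Cconj_R. ring.
  - ring.
  - rewrite Cmult_conj, Cconj_R. ring.
Qed.

(* [getn] and [setn] read and replace the H' index of a basis label, so that the lemma covers
   both H' and C^d (x) H'. *)
Lemma psd_kraus_map {J} (dom : J -> Prop) (F : J -> J -> C) (getn : J -> nat) (setn : J -> nat -> J) A :
  amp_bounded A -> psd_on dom F -> (forall x n, dom x -> dom (setn x n)) ->
  (forall x, dom x -> ex_series (fun n => Re (F (setn x n) (setn x n)))) ->
  psd_on dom (fun x y => Series_C (kraus_terms A (fun n m => F (setn x n) (setn y m)) (getn x) (getn y))).
Proof.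
  intros HA HF Hset Hdiag L HL.
  assert (Hdg : forall x n, dom x -> 0 <= Re (F (setn x n) (setn x n))).
  { intros x n Hx. assert (H : Im (qform F ((setn x n, RtoC 1) :: nil)) = 0 /\ 0 <= Re (qform F ((setn x n, RtoC 1) :: nil))).
    { apply HF. repeat constructor; simpl; auto. }
    destruct H as [_ H]. rewrite qform_single in H. lra. }
  assert (Hconv : forall x y, dom x -> dom y ->
    is_series (V:=C_R_NormedModule) (kraus_terms A (fun n m => F (setn x n) (setn y m)) (getn x) (getn y))
      (Series_C (kraus_terms A (fun n m => F (setn x n) (setn y m)) (getn x) (getn y)))).
  { intros x y Hx Hy. apply Series_C_correct.
    apply (kraus_terms_conv A _ _ _ (fun n => Re (F (setn x n) (setn x n))) (fun m => Re (F (setn y m) (setn y m)))).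
    auto. split; [|split; [|split; [|split]]]; auto.
    intros n m. apply (psd_entry_bound dom); auto. }
  rewrite List.Forall_forall in HL.
  set (EF := fun x y => Series_C (kraus_terms A (fun n m => F (setn x n) (setn y m)) (getn x) (getn y))).
  assert (Hs : is_series (V:=C_R_NormedModule)
     (fun j => sesq (fun x y => kraus_terms A (fun n m => F (setn x n) (setn y m)) (getn x) (getn y) j) L L)
     (sesq EF L L)).
  { unfold sesq. apply is_series_lsum. intros x Hx. apply is_series_lsum. intros y Hy.
    apply is_series_Cscal_r. apply is_series_Cscal. apply Hconv; auto. }
  rewrite qform_sesq. apply (is_series_C_nonneg_real _ _ Hs). intros j.
  unfold kraus_terms. rewrite sesq_plus, !sesq_kraus_term.
  assert (HLk : forall k, List.Forall (fun ax => dom (fst ax)) (kraus_list A getn setn k L)).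
  { intros k. apply List.Forall_forall. intros z Hz. unfold kraus_list in Hz. apply in_map_iff in Hz.
    destruct Hz as (x&<-&Hx). simpl. apply Hset. auto. }
  destruct (HF _ (HLk (Z.of_nat j))), (HF _ (HLk (- Z.of_nat (S j))%Z)).
  rewrite re_plus, im_plus. split; lra.
Qed.

Lemma psd_shift_channel A X : amp_bounded A -> pos_tc X -> psd_on (fun _ => True) (shift_channel A X).
Proof. intros HA HX.
  apply (psd_kraus_map (fun _ : nat => True) X (fun x => x) (fun _ n => n) A HA (proj1 HX)); auto.
  intros. apply HX. Qed.

Lemma cp_shift_channel A d (Y : nat -> nat -> Op) : amp_bounded A -> pos_tc_block d Y ->
  psd_block d (fun i j => shift_channel A (Y i j)).
Proof. intros HA [HY Hs].
  assert (Hdg : forall i n, (i < d)%nat -> 0 <= Re (Y i i n n)).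
  { intros i n Hi. assert (H := HY (((i, n), RtoC 1) :: nil) ltac:(repeat constructor; simpl; auto)).
    destruct H as [_ H]. rewrite qform_single in H. simpl in H. lra. }
  apply (psd_kraus_map (fun x : nat * nat => (fst x < d)%nat) (fun ia jb => Y (fst ia) (fst jb) (snd ia) (snd jb))
     snd (fun x n => (fst x, n)) A HA HY); auto.
  intros [i a] Hi. simpl in Hi. simpl.
  apply (ex_series_le_R _ (fun n => fold_right (fun i acc => Re (Y i i n n) + acc) 0 (seq 0 d))).
  2: exact Hs.
  intros n. rewrite Rabs_pos_eq by (apply Hdg; auto).
  apply (fold_sum_ge_term (fun j => Re (Y j j n n)) (seq 0 d) i).
  intros x Hx. apply in_seq in Hx. apply Hdg. lia. apply in_seq. lia.
Qed.

Lemma entry_bound_pos X : pos_tc X -> entry_bound X (fun n => Re (X n n)) (fun n => Re (X n n)).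
Proof. intros HX. split; [|split; [|split; [|split]]].
  - intros n; apply pos_tc_diag; auto.
  - intros n; apply pos_tc_diag; auto.
  - apply HX.
  - apply HX.
  - intros n m. apply (psd_entry_bound (fun _ => True)); auto. apply HX. Qed.

Lemma kraus_terms_series_pos A X a b : amp_bounded A -> pos_tc X -> is_series (V:=C_R_NormedModule) (kraus_terms A X a b) (shift_channel A X a b).
Proof. intros HA HX. apply Series_C_correct. eapply kraus_terms_conv. auto. apply entry_bound_pos. auto. Qed.

Lemma kraus_term_diag A X a n : kraus_term A X a a (Z.of_nat n - Z.of_nat a)%Z =
  (RtoC (A n a) * X n n * RtoC (A n a))%C.
Proof. unfold kraus_term, kraus_vanish. destruct (Z.ltb_spec (Z.of_nat a + (Z.of_nat n - Z.of_nat a)) 0). lia.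
  simpl. replace (Z.to_nat (Z.of_nat a + (Z.of_nat n - Z.of_nat a))) with n by lia. reflexivity. Qed.

Lemma kraus_term_neg A X a b k : (Z.of_nat a + k < 0)%Z -> kraus_term A X a b k = 0%C.
Proof. intros H. unfold kraus_term, kraus_vanish. destruct (Z.ltb_spec (Z.of_nat a + k) 0). reflexivity. lia. Qed.

Lemma trace_shift_channel A X tr : amp_bounded A -> (forall n, is_series (fun a => A n a * A n a) 1) -> pos_tc X ->
  is_series (fun n => Re (X n n)) tr -> has_trace (shift_channel A X) (RtoC tr).
Proof.
  intros HA HA1 HX Htr.
  assert (HRe : forall a, is_series (fun n => A n a * A n a * Re (X n n)) (Re (shift_channel A X a a))).
  { intros a. pose proof (kraus_terms_series_pos A X a a HA HX) as H. apply is_series_C in H. destruct H as [H _].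
    assert (HZ : is_sumZ (fun k => Re (kraus_term A X a a k)) (Re (shift_channel A X a a))).
    { unfold is_sumZ. eapply is_series_extR. 2: exact H. intros j. unfold kraus_terms. rewrite re_plus. reflexivity. }
    apply (is_sumZ_shift _ a) in HZ.
    - eapply is_series_extR. 2: exact HZ. intros n. cbv beta. rewrite kraus_term_diag, Re_scal_lr. reflexivity.
    - intros k Hk. cbv beta. rewrite kraus_term_neg by lia. reflexivity. }
  assert (HIm : forall a, Im (shift_channel A X a a) = 0).
  { intros a. pose proof (kraus_terms_series_pos A X a a HA HX) as H. apply is_series_C in H. destruct H as [_ H].
    apply (is_series_uniq (fun j => snd (kraus_terms A X a a j))). auto.
    eapply is_series_extR. 2: apply is_series_zero. intros j. unfold kraus_terms.
    change (snd (kraus_term A X a a (Z.of_nat j) + kraus_term A X a a (- Z.of_nat (S j)))%C) with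
      (Im (kraus_term A X a a (Z.of_nat j) + kraus_term A X a a (- Z.of_nat (S j)))%C).
    rewrite im_plus. unfold kraus_term. destruct (kraus_vanish a a (Z.of_nat j)), (kraus_vanish a a (- Z.of_nat (S j)));
      rewrite ?Im_scal_lr, ?(proj1 (pos_tc_diag X _ HX)); simpl; ring. }
  destruct (is_series_swap_nonneg (fun n a => A n a * A n a * Re (X n n)) (fun n => Re (X n n)) tr) as [s [Hs1 Hs2]].
  - intros n a. apply Rmult_le_pos. destruct (HA n a). nra. apply pos_tc_diag; auto.
  - intros n. eapply is_series_ext_eq. 2: apply (is_series_scalR (Re (X n n)) _ _ (HA1 n)).
    intros a. simpl. ring. ring.
  - auto.
  - unfold has_trace. apply is_series_C. split.
    + simpl. eapply is_series_extR. 2: exact Hs2. intros a. simpl. symmetry.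
      apply (is_series_uniq (fun n => A n a * A n a * Re (X n n))). apply HRe. apply Hs1.
    + simpl. eapply is_series_extR. 2: apply is_series_zero. intros a. symmetry. apply HIm.
Qed.

Lemma kraus_term_ext A F G a b k : (forall n m, F n m = G n m) -> kraus_term A F a b k = kraus_term A G a b k.
Proof. intros H. unfold kraus_term. rewrite H. reflexivity. Qed.

Lemma kraus_term_lin A F G c a b k :
  kraus_term A (fun n m => F n m + c * G n m)%C a b k = (kraus_term A F a b k + c * kraus_term A G a b k)%C.
Proof. unfold kraus_term. destruct (kraus_vanish a b k). ring. ring. Qed.

Lemma kraus_term_comb4 A F1 F2 F3 F4 a b k :
  kraus_term A (fun n m => F1 n m - F2 n m + Ci * (F3 n m - F4 n m))%C a b k =
  (kraus_term A F1 a b k - kraus_term A F2 a b k + Ci * (kraus_term A F3 a b k - kraus_term A F4 a b k))%C.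
Proof. unfold kraus_term. destruct (kraus_vanish a b k). ring. ring. Qed.

Lemma shift_channel_comb4 A X X1 X2 X3 X4 : amp_bounded A -> pos_tc X1 -> pos_tc X2 -> pos_tc X3 -> pos_tc X4 ->
  (forall m n, X m n = (X1 m n - X2 m n + Ci * (X3 m n - X4 m n))%C) ->
  forall a b, shift_channel A X a b = (shift_channel A X1 a b - shift_channel A X2 a b + Ci * (shift_channel A X3 a b - shift_channel A X4 a b))%C.
Proof. intros HA P1 P2 P3 P4 HX a b. apply Series_C_unique.
  eapply is_series_Cext. 2: apply is_series_comb4; apply kraus_terms_series_pos; eauto.
  intros j. unfold kraus_terms. rewrite !(kraus_term_ext A X _ a b _ HX), !kraus_term_comb4. ring. Qed.

Lemma kraus_terms_series A X a b : amp_bounded A -> trace_class X ->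
  is_series (V:=C_R_NormedModule) (kraus_terms A X a b) (shift_channel A X a b).
Proof.
  intros HA (X1&X2&X3&X4&P1&P2&P3&P4&HX).
  rewrite (shift_channel_comb4 A X X1 X2 X3 X4 HA P1 P2 P3 P4 HX).
  eapply is_series_Cext. 2: apply is_series_comb4; apply kraus_terms_series_pos; eauto.
  intros j. unfold kraus_terms. rewrite !(kraus_term_ext A X _ a b _ HX), !kraus_term_comb4. ring.
Qed.

Lemma shift_channel_lin A X Y c : amp_bounded A -> trace_class X -> trace_class Y ->
  forall a b, shift_channel A (fun i j => X i j + c * Y i j)%C a b = (shift_channel A X a b + c * shift_channel A Y a b)%C.
Proof. intros HA HX HY a b. apply Series_C_unique.
  eapply is_series_Cext. 2: apply is_series_Cplus; [apply kraus_terms_series; auto|apply is_series_Cscal; apply kraus_terms_series; auto].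
  intros j. unfold kraus_terms. rewrite !kraus_term_lin. ring. Qed.

Lemma INR_Z_to_nat_add (a : nat) (k : Z) : (0 <= Z.of_nat a + k)%Z -> INR (Z.to_nat (Z.of_nat a + k)) = INR a + IZR k.
Proof. intros H. rewrite INR_IZR_INZ, Z2Nat.id by lia. rewrite plus_IZR, <- INR_IZR_INZ. reflexivity. Qed.

Lemma kraus_term_rot A X phi a b k :
  kraus_term A (rotU1 phi X) a b k = (eiphi (phi * INR a) * kraus_term A X a b k * eiphi (- (phi * INR b)))%C.
Proof. unfold kraus_term, kraus_vanish, rotU1.
  destruct (Z.ltb_spec (Z.of_nat a + k) 0), (Z.ltb_spec (Z.of_nat b + k) 0); simpl; try ring.
  rewrite !INR_Z_to_nat_add by lia.
  set (Z := X (Z.to_nat (Z.of_nat a + k)) (Z.to_nat (Z.of_nat b + k))).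
  set (r1 := A (Z.to_nat (Z.of_nat a + k)) a). set (r2 := A (Z.to_nat (Z.of_nat b + k)) b).
  transitivity (RtoC r1 * Z * RtoC r2 * (eiphi (phi * (INR a + IZR k)) * eiphi (- (phi * (INR b + IZR k)))))%C. ring.
  transitivity (RtoC r1 * Z * RtoC r2 * (eiphi (phi * INR a) * eiphi (- (phi * INR b))))%C.
  rewrite !eiphi_mult. f_equal. f_equal. ring. ring. Qed.

Lemma shift_channel_rot A X phi : amp_bounded A -> trace_class X -> shift_channel A (rotU1 phi X) = rotU1 phi (shift_channel A X).
Proof. intros HA HX. apply Op_ext. intros a b. apply Series_C_unique.
  eapply is_series_Cext. 2: apply is_series_Cscal_r; apply is_series_Cscal; apply kraus_terms_series; eauto.
  intros j. unfold kraus_terms. rewrite !kraus_term_rot. ring. Qed.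

Lemma pos_shift_channel A X : amp_bounded A -> (forall n, is_series (fun a => A n a * A n a) 1) -> pos_tc X ->
  pos_tc (shift_channel A X) /\ exists tr, has_trace X (RtoC tr) /\ has_trace (shift_channel A X) (RtoC tr).
Proof. intros HA HA1 HX. destruct (pos_tc_has_trace X HX) as [tr [H1 H2]].
  pose proof (trace_shift_channel A X tr HA HA1 HX H1) as H3. split.
  - split. apply psd_shift_channel; auto. apply is_series_C in H3. destruct H3 as [H3 _]. eexists. exact H3.
  - exists tr. auto. Qed.

Lemma shift_channel_deterministic A : amp_bounded A -> (forall n, is_series (fun a => A n a * A n a) 1) ->
  deterministic_U1_operation (shift_channel A).
Proof.
  intros HA HA1.
  assert (Hdet : forall X t, trace_class X -> has_trace X t -> has_trace (shift_channel A X) t).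
  { intros X t (X1&X2&X3&X4&P1&P2&P3&P4&HX) Ht.
    destruct (pos_shift_channel A X1 HA HA1 P1) as [_ (t1&T1&E1)].
    destruct (pos_shift_channel A X2 HA HA1 P2) as [_ (t2&T2&E2)].
    destruct (pos_shift_channel A X3 HA HA1 P3) as [_ (t3&T3&E3)].
    destruct (pos_shift_channel A X4 HA HA1 P4) as [_ (t4&T4&E4)].
    pose proof (has_trace_comb4 _ _ _ _ _ _ _ _ _ HX T1 T2 T3 T4) as HT.
    rewrite (has_trace_unique _ _ _ Ht HT).
    apply (has_trace_comb4 _ (shift_channel A X1) (shift_channel A X2) (shift_channel A X3) (shift_channel A X4)); auto.
    apply shift_channel_comb4; auto. }
  split; [|exact Hdet]. split; [|split; [|split; [|split]]].
  - intros X Y c HX HY m n. apply shift_channel_lin; auto.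
  - intros X (X1&X2&X3&X4&P1&P2&P3&P4&HX).
    exists (shift_channel A X1), (shift_channel A X2), (shift_channel A X3), (shift_channel A X4).
    split; [apply pos_shift_channel; auto|]. split; [apply pos_shift_channel; auto|].
    split; [apply pos_shift_channel; auto|]. split; [apply pos_shift_channel; auto|].
    apply shift_channel_comb4; auto.
  - intros d Y HY. apply cp_shift_channel; auto.
  - intros X t HX Ht. exists t. split. apply Hdet; auto. apply trace_class_pos; auto. lra.
  - intros phi X HX. apply shift_channel_rot; auto.
Qed.

(** * From a shift mixture to a conversion *)

Definition shift_mixture (p q : nat -> R) (w : Z -> R) : Prop :=
  (forall n, 0 <= p n) /\ (forall n, 0 <= q n) /\ is_series p 1 /\ is_series q 1 /\
  (forall k, 0 <= w k <= 1) /\ is_sumZ w 1 /\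
  (forall m : nat, is_sumZ (fun k => w k * Upsilon k q m) (p m)).

Lemma shift_mixture_row p q w n : shift_mixture p q w -> is_series (fun a => w (Z.of_nat n - Z.of_nat a)%Z * q a) (p n).
Proof. intros (hp&hq&hp1&hq1&Hw&Hw1&Hm).
  pose proof (Hm n) as H. apply (is_sumZ_reflect_shift _ n) in H.
  - eapply is_series_extR. 2: exact H. intros a. unfold Upsilon, extZ.
    destruct (Z.ltb_spec (Z.of_nat n - (Z.of_nat n - Z.of_nat a)) 0). lia.
    f_equal. f_equal. lia.
  - intros k Hk. unfold Upsilon, extZ. destruct (Z.ltb_spec (Z.of_nat n - k) 0). ring. lia. Qed.

Lemma shift_mixture_term_nonneg p q w n a : shift_mixture p q w -> 0 <= w (Z.of_nat n - Z.of_nat a)%Z * q a.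
Proof. intros (hp&hq&hp1&hq1&Hw&_). apply Rmult_le_pos. apply Hw. apply hq. Qed.

Lemma shift_mixture_term_le p q w n a : shift_mixture p q w -> w (Z.of_nat n - Z.of_nat a)%Z * q a <= p n.
Proof. intros H. apply (term_le_series (fun a => w (Z.of_nat n - Z.of_nat a)%Z * q a) (p n) a).
  intros; apply (shift_mixture_term_nonneg p q w); auto. apply shift_mixture_row; auto. Qed.

(* sqrt (w_{n-a} q_a / p_n); a row with p_n = 0 is given the identity instead. *)
Definition amp (p q : nat -> R) (w : Z -> R) (n a : nat) : R :=
  if Rlt_dec 0 (p n) then sqrt (w (Z.of_nat n - Z.of_nat a)%Z * q a / p n)
  else (if Nat.eqb n a then 1 else 0).

Lemma amp_nonneg p q w n a : 0 <= amp p q w n a.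
Proof. unfold amp. destruct (Rlt_dec 0 (p n)). apply sqrt_pos. destruct (Nat.eqb n a); lra. Qed.

Lemma amp_sq_series p q w n : shift_mixture p q w -> is_series (fun a => amp p q w n a * amp p q w n a) 1.
Proof. intros H. unfold amp. destruct (Rlt_dec 0 (p n)).
  - eapply is_series_ext_eq. 2: apply (is_series_scalR (/ p n) _ _ (shift_mixture_row p q w n H)).
    intros a. rewrite sqrt_sqrt. field. lra. apply Rmult_le_pos. apply (shift_mixture_term_nonneg p q w); auto.
    left. apply Rinv_0_lt_compat. auto. field. lra.
  - set (f := fun a => (if Nat.eqb n a then 1 else 0) * (if Nat.eqb n a then 1 else 0)).
    apply (is_series_ext_eq f f (psum f (S n)) 1). reflexivity.
    apply is_series_finite. intros k Hk. unfold f. destruct (Nat.eqb_spec n k). lia. ring.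
    simpl. unfold f at 2. rewrite Nat.eqb_refl. rewrite (psum_ext _ (fun _ => 0)).
    assert (Hz : forall m, psum (fun _ => 0) m = 0) by (induction m; simpl; [ring| rewrite IHm; ring]).
    rewrite Hz. ring. intros i Hi. unfold f. destruct (Nat.eqb_spec n i). lia. ring. Qed.

Lemma amp_le1 p q w n a : shift_mixture p q w -> amp p q w n a <= 1.
Proof. intros H.
  assert (Hp : forall k, 0 <= amp p q w n k * amp p q w n k) by (intros; apply Rmult_le_pos; apply amp_nonneg).
  pose proof (term_le_series _ _ a Hp (amp_sq_series p q w n H)). simpl in H0.
  pose proof (amp_nonneg p q w n a). nra. Qed.

Lemma amp_sqrt p q w n a : shift_mixture p q w ->
  amp p q w n a * sqrt (p n) = sqrt (w (Z.of_nat n - Z.of_nat a)%Z * q a).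
Proof. intros H. pose proof H as (hp&_). unfold amp. destruct (Rlt_dec 0 (p n)).
  - rewrite <- sqrt_mult. f_equal. field. lra. apply Rmult_le_pos. apply (shift_mixture_term_nonneg p q w); auto.
    left. apply Rinv_0_lt_compat. auto. lra.
  - assert (p n = 0) by (specialize (hp n); lra). rewrite H0, sqrt_0.
    pose proof (shift_mixture_term_le p q w n a H). pose proof (shift_mixture_term_nonneg p q w n a H).
    replace (w (Z.of_nat n - Z.of_nat a)%Z * q a) with 0 by lra. rewrite sqrt_0. ring. Qed.

Lemma amp_bounded_of_mixture p q w : shift_mixture p q w -> amp_bounded (amp p q w).
Proof. intros H n a. split. apply amp_nonneg. apply amp_le1; auto. Qed.

Lemma shift_weight_split p q w a : shift_mixture p q w -> exists c, is_series (fun n => w (Z.of_nat n - Z.of_nat a)%Z) c /\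
  (forall k, (Z.of_nat a + k < 0)%Z -> w k <= 1 - c).
Proof. intros H. pose proof H as (hp&hq&hp1&hq1&Hw&Hw1&Hm).
  set (wp := fun k => if (Z.of_nat a + k <? 0)%Z then 0 else w k).
  set (wm := fun k => if (Z.of_nat a + k <? 0)%Z then w k else 0).
  assert (Hw0 : forall k, 0 <= w k) by (intros; apply Hw).
  destruct (is_sumZ_dominated w wp 1) as [c Hc]; auto.
  { intros k. unfold wp. destruct (Z.ltb_spec (Z.of_nat a + k) 0); split; auto; lra. }
  destruct (is_sumZ_dominated w wm 1) as [d Hd]; auto.
  { intros k. unfold wm. destruct (Z.ltb_spec (Z.of_nat a + k) 0); split; auto; lra. }
  assert (Hcd : c + d = 1).
  { unfold is_sumZ in *. eapply is_series_uniq. apply (is_series_plusR _ _ _ _ Hc Hd).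
    eapply is_series_extR. 2: exact Hw1. intros n. unfold wp, wm.
    destruct (Z.ltb_spec (Z.of_nat a + Z.of_nat n) 0), (Z.ltb_spec (Z.of_nat a + - Z.of_nat (S n)) 0); ring. }
  exists c. split.
  - apply (is_sumZ_shift wp a) in Hc.
    + eapply is_series_extR. 2: exact Hc. intros n. unfold wp.
      destruct (Z.ltb_spec (Z.of_nat a + (Z.of_nat n - Z.of_nat a)) 0). lia. reflexivity.
    + intros k Hk. unfold wp. destruct (Z.ltb_spec (Z.of_nat a + k) 0). auto. lia.
  - intros k Hk. apply is_sumZ_reflect in Hd. apply (is_sumZ_shift _ 0) in Hd.
    + assert (Hwm : forall k, 0 <= wm k).
      { intros k'. unfold wm. destruct (Z.ltb_spec (Z.of_nat a + k') 0); [apply Hw0|lra]. }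
      pose proof (term_le_series _ _ (Z.to_nat (- k - 1)) (fun n => Hwm _) Hd).
      simpl in H0. unfold wm in H0.
      replace (- (Z.of_nat (Z.to_nat (- k - 1)) - 0) - 1)%Z with k in H0 by lia.
      destruct (Z.ltb_spec (Z.of_nat a + k) 0). lra. lia.
    + intros k' Hk'. unfold wm. destruct (Z.ltb_spec (Z.of_nat a + (- k' - 1)) 0). lia. auto.
Qed.

(* Summing p_n = sum_a w_{n-a} q_a over n gives sum_a c_a q_a = 1 = sum_a q_a, where c_a <= 1
   is the w-mass on k >= -a; so q_a > 0 leaves no w-mass on k < -a. *)
Lemma shift_mixture_no_leak p q w a k : shift_mixture p q w -> (Z.of_nat a + k < 0)%Z -> w k * q a = 0.
Proof. intros H Hk. pose proof H as (hp&hq&hp1&hq1&Hw&Hw1&Hm).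
  assert (Hc := fun a => constructive_indefinite_description _ (shift_weight_split p q w a H)).
  set (c := fun a => proj1_sig (Hc a)).
  assert (Hc1 : forall a, is_series (fun n => w (Z.of_nat n - Z.of_nat a)%Z) (c a)) by (intros; apply (proj2_sig (Hc a0))).
  assert (Hc2 : forall a k, (Z.of_nat a + k < 0)%Z -> w k <= 1 - c a) by (intros; apply (proj2_sig (Hc a0)); auto).
  clearbody c. clear Hc.
  destruct (is_series_swap_nonneg (fun n a => w (Z.of_nat n - Z.of_nat a)%Z * q a) p 1) as [s [Hs1 Hs2]].
  intros; apply (shift_mixture_term_nonneg p q w); auto. intros; apply shift_mixture_row; auto. auto.
  assert (Hsc : forall a, s a = c a * q a).
  { intros b. eapply is_series_uniq. apply Hs1. eapply is_series_ext_eq.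
    2: apply (is_series_scalR (q b) _ _ (Hc1 b)). intros n. simpl. ring. apply Rmult_comm. }
  assert (Hd0 : forall a, 0 <= q a * (1 - c a)).
  { intros b. apply Rmult_le_pos. auto. pose proof (Hc2 b (- Z.of_nat b - 1)%Z ltac:(lia)).
    pose proof (Hw (- Z.of_nat b - 1)%Z). lra. }
  assert (Hser : is_series (fun a => q a * (1 - c a)) 0).
  { eapply is_series_ext_eq. 2: apply (is_series_minusR _ _ _ _ hq1 Hs2).
    intros b. cbv beta. rewrite Hsc. ring. ring. }
  pose proof (term_le_series _ _ a Hd0 Hser).
  pose proof (Hc2 a k Hk). pose proof (Hw k). pose proof (hq a).
  assert (q a * (1 - c a) = 0) by (pose proof (Hd0 a); lra).
  assert (0 <= w k * q a) by nra. nra. Qed.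

Lemma kraus_term_proj_sqrt p q w a b k : shift_mixture p q w ->
  kraus_term (amp p q w) (proj_sqrt p) a b k = RtoC (w k * (sqrt (q a) * sqrt (q b))).
Proof. intros H. pose proof H as (hp&hq&hp1&hq1&Hw&_).
  assert (Hz : forall c, (Z.of_nat c + k < 0)%Z -> w k * sqrt (q c) = 0).
  { intros c Hc. pose proof (shift_mixture_no_leak p q w c k H Hc). destruct (Hw k) as [Hw0 _].
    destruct (Rle_lt_or_eq_dec 0 (w k) Hw0) as [Hp|Hp].
    - assert (q c = 0). { apply Rmult_eq_reg_l with (w k). lra. lra. } rewrite H1, sqrt_0. ring.
    - rewrite <- Hp. ring. }
  unfold kraus_term, kraus_vanish.
  destruct (Z.ltb_spec (Z.of_nat a + k) 0), (Z.ltb_spec (Z.of_nat b + k) 0); simpl.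
  - replace (w k * (sqrt (q a) * sqrt (q b))) with ((w k * sqrt (q a)) * sqrt (q b)) by ring. rewrite Hz by auto.
    apply injective_projections; simpl; ring.
  - replace (w k * (sqrt (q a) * sqrt (q b))) with ((w k * sqrt (q a)) * sqrt (q b)) by ring. rewrite Hz by auto.
    apply injective_projections; simpl; ring.
  - replace (w k * (sqrt (q a) * sqrt (q b))) with ((w k * sqrt (q b)) * sqrt (q a)) by ring. rewrite Hz by auto.
    apply injective_projections; simpl; ring.
  - unfold proj_sqrt. rewrite <- !RtoC_mult. f_equal.
    set (n := Z.to_nat (Z.of_nat a + k)). set (m := Z.to_nat (Z.of_nat b + k)).
    transitivity ((amp p q w n a * sqrt (p n)) * (amp p q w m b * sqrt (p m))). ring.
    rewrite !amp_sqrt by auto.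
    replace (Z.of_nat n - Z.of_nat a)%Z with k by (unfold n; lia).
    replace (Z.of_nat m - Z.of_nat b)%Z with k by (unfold m; lia).
    destruct (Hw k) as [Hw0 _].
    rewrite !sqrt_mult by auto. replace (sqrt (w k) * sqrt (q a) * (sqrt (w k) * sqrt (q b))) with
      ((sqrt (w k) * sqrt (w k)) * (sqrt (q a) * sqrt (q b))) by ring.
    rewrite sqrt_sqrt by auto. reflexivity.
Qed.

Lemma shift_channel_proj_sqrt p q w : shift_mixture p q w -> shift_channel (amp p q w) (proj_sqrt p) = proj_sqrt q.
Proof. intros H. pose proof H as (hp&hq&hp1&hq1&Hw&Hw1&_). apply Op_ext. intros a b.
  apply Series_C_unique. apply is_series_C. split.
  - simpl. unfold is_sumZ in Hw1. eapply is_series_ext_eq. 2: apply (is_series_scalR (sqrt (q a) * sqrt (q b)) _ _ Hw1).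
    intros j. unfold kraus_terms. rewrite !kraus_term_proj_sqrt by auto. simpl. ring. ring.
  - simpl. eapply is_series_extR. 2: apply is_series_zero. intros j. unfold kraus_terms. rewrite !kraus_term_proj_sqrt by auto.
    simpl. ring.
Qed.

Lemma shift_mixture_to_conversion (p q : nat -> R)
  (hp : forall n, 0 <= p n) (hq : forall n, 0 <= q n)
  (hp1 : is_series p 1) (hq1 : is_series q 1) (w : Z -> R) :
  (forall k, 0 <= w k <= 1) -> is_sumZ w 1 ->
  (forall m : nat, is_sumZ (fun k => w k * Upsilon k q m) (p m)) ->
  exists E : Op -> Op, deterministic_U1_operation E /\ E (proj_sqrt p) = proj_sqrt q.
Proof. intros Hw Hw1 Hm. assert (H : shift_mixture p q w) by (repeat split; auto; apply Hw).
  exists (shift_channel (amp p q w)). split.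
  - apply shift_channel_deterministic. apply amp_bounded_of_mixture; auto. intros n. apply amp_sq_series; auto.
  - apply shift_channel_proj_sqrt; auto. Qed.

Theorem theorem3 (p q : nat -> R)
  (hp : forall n, 0 <= p n) (hq : forall n, 0 <= q n)
  (hp1 : is_series p 1) (hq1 : is_series q 1) :
  (exists E : Op -> Op, deterministic_U1_operation E /\
      E (proj_sqrt p) = proj_sqrt q)
  <->
  (exists w : Z -> R, (forall k, 0 <= w k <= 1) /\ is_sumZ w 1 /\
      forall m : nat, is_sumZ (fun k => w k * Upsilon k q m) (p m)).
Proof.
  split.
  - intros (E & HD & Hpq). destruct (series_one_pos_term q hq hq1) as [b0 Hb0].
    exists (shift_weight p q E b0). split; [|split].
    + intros k. split. apply shift_weight_nonneg; auto. apply shift_weight_le1; auto.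
    + apply shift_weight_sumZ; auto.
    + apply shift_weight_mixture; auto.
  - intros (w & Hw & Hw1 & Hm). apply (shift_mixture_to_conversion p q hp hq hp1 hq1 w Hw Hw1 Hm).
Qed.
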